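(* Let $G=\{g_t\}_{t\in\mathbb R}$ be a continuous one-parameter subgroup of the affine group $\mathcal G$ with a strongly continuous unitary representation $G\ni g\mapsto U_g$ on a separable Hilbert space, and let $\dot A$ be a $G$-invariant closed densely defined symmetric operator with deficiency indices $(1,1)$. Suppose that $\dot A$ has no self-adjoint $G$-invariant extension. Then there exists an element $g\in G$, different from the identity, such that, denoting by $G[g]$ the (discrete) cyclic subgroup generated by $g$, every maximal dissipative extension $A$ of $\dot A$ with $\dot A\subset A\subset(\dot A)^*$ (in particular every self-adjoint extension) is $G[g]$-invariant with respect to the restriction of the representation to $G[g]$.
   Context: $\mathcal G$ is the group (under composition) of affine maps $g(x)=ax+b$ of $\mathbb R$ with $a>0$, $b\in\mathbb R$; for an operator $A$, $g(A)=aA+bI$. For a subgroup $H\subset\mathcal G$ with unitary representation $h\mapsto U_h$, a densely defined closed operator $A$ is $H$-invariant if $U_h(\mathrm{Dom}(A))=\mathrm{Dom}(A)$ and $U_hAU_h^*f=aAf+bf$ for all $f\in\mathrm{Dom}(A)$ and all $h\in H$, $h(x)=ax+b$. An operator is maximal dissipative if $\operatorname{Im}(Af,f)\ge0$ on its domain and it has no proper dissipative extension. *)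

From Stdlib Require Import Reals ZArith.
From Coquelicot Require Import Coquelicot.

Set Implicit Arguments.
Local Open Scope R_scope.

(* Complex Hilbert spaces (inner product linear in the FIRST argument,  *)
(* conjugate-linear in the second), complete and separable.            *)
Record HilbertSpace := {
  hs :> Type;
  hzero : hs;
  hadd : hs -> hs -> hs;
  hopp : hs -> hs;
  hscal : C -> hs -> hs;
  hinner : hs -> hs -> C;
  hadd_assoc : forall x y z, hadd x (hadd y z) = hadd (hadd x y) z;
  hadd_comm : forall x y, hadd x y = hadd y x;
  hadd_zero : forall x, hadd x hzero = x;
  hadd_opp : forall x, hadd x (hopp x) = hzero;
  hscal_assoc : forall (a b : C) x, hscal a (hscal b x) = hscal (Cmult a b) x;
  hscal_one : forall x, hscal (RtoC 1) x = x;
  hscal_distr_l : forall (a : C) x y, hscal a (hadd x y) = hadd (hscal a x) (hscal a y);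
  hscal_distr_r : forall (a b : C) x, hscal (Cplus a b) x = hadd (hscal a x) (hscal b x);
  hinner_add_l : forall x y z, hinner (hadd x y) z = Cplus (hinner x z) (hinner y z);
  hinner_scal_l : forall (a : C) x y, hinner (hscal a x) y = Cmult a (hinner x y);
  hinner_conj : forall x y, hinner y x = Cconj (hinner x y);
  hinner_pos : forall x, 0 <= Re (hinner x x);
  hinner_definite : forall x, hinner x x = RtoC 0 -> x = hzero;
  hcomplete : forall u : nat -> hs,
    (forall eps, 0 < eps -> exists N, forall m n, (N <= m)%nat -> (N <= n)%nat ->
        sqrt (Re (hinner (hadd (u m) (hopp (u n))) (hadd (u m) (hopp (u n))))) < eps) ->
    exists x, forall eps, 0 < eps -> exists N, forall n, (N <= n)%nat ->
        sqrt (Re (hinner (hadd (u n) (hopp x)) (hadd (u n) (hopp x)))) < eps;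
  hseparable : exists d : nat -> hs, forall x eps, 0 < eps -> exists n,
        sqrt (Re (hinner (hadd x (hopp (d n))) (hadd x (hopp (d n))))) < eps
}.

Arguments hzero {h}.
Arguments hadd {h}.
Arguments hopp {h}.
Arguments hscal {h}.
Arguments hinner {h}.

Section HilbertDefs.
Variable H : HilbertSpace.

Definition hsub (x y : H) : H := hadd x (hopp y).
Definition hnorm (x : H) : R := sqrt (Re (hinner x x)).

Definition hconverges (u : nat -> H) (x : H) : Prop :=
  forall eps, 0 < eps -> exists N, forall n, (N <= n)%nat -> hnorm (hsub (u n) x) < eps.

(* The action outside the domain is irrelevant.                       *)
Record Operator := { dom : H -> Prop; app : H -> H }.

Definition linear_op (A : Operator) : Prop :=
  dom A hzero /\
  (forall x y, dom A x -> dom A y -> dom A (hadd x y)) /\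
  (forall (c : C) x, dom A x -> dom A (hscal c x)) /\
  (forall x y, dom A x -> dom A y -> app A (hadd x y) = hadd (app A x) (app A y)) /\
  (forall (c : C) x, dom A x -> app A (hscal c x) = hscal c (app A x)).

Definition densely_defined (A : Operator) : Prop :=
  forall x eps, 0 < eps -> exists y, dom A y /\ hnorm (hsub x y) < eps.

Definition closed_op (A : Operator) : Prop :=
  forall (u : nat -> H) x y, (forall n, dom A (u n)) ->
    hconverges u x -> hconverges (fun n => app A (u n)) y ->
    dom A x /\ app A x = y.

Definition symmetric_op (A : Operator) : Prop :=
  forall x y, dom A x -> dom A y -> hinner (app A x) y = hinner x (app A y).

Definition op_le (A B : Operator) : Prop :=
  (forall x, dom A x -> dom B x) /\ (forall x, dom A x -> app B x = app A x).

Definition adjoint_graph (A : Operator) (y z : H) : Prop :=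
  forall x, dom A x -> hinner (app A x) y = hinner x z.

Definition op_le_adjoint (B A : Operator) : Prop :=
  forall y, dom B y -> adjoint_graph A y (app B y).

Definition self_adjoint (A : Operator) : Prop :=
  linear_op A /\ densely_defined A /\
  forall y z, adjoint_graph A y z <-> (dom A y /\ app A y = z).

Definition defect_space (A : Operator) (z : C) (y : H) : Prop :=
  adjoint_graph A y (hscal z y).

Definition dim_one (K : H -> Prop) : Prop :=
  exists v, v <> hzero /\ K v /\ forall w, K w <-> exists c : C, w = hscal c v.

Definition deficiency_indices_1_1 (A : Operator) : Prop :=
  dim_one (defect_space A Ci) /\ dim_one (defect_space A (Copp Ci)).

Definition dissipative (A : Operator) : Prop :=
  linear_op A /\ forall f, dom A f -> 0 <= Im (hinner (app A f) f).

Definition maximal_dissipative (A : Operator) : Prop :=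
  dissipative A /\
  forall B, dissipative B -> op_le A B -> forall x, dom B x -> dom A x.

Definition unitary (U : H -> H) : Prop :=
  (forall x y, U (hadd x y) = hadd (U x) (U y)) /\
  (forall (c : C) x, U (hscal c x) = hscal c (U x)) /\
  (forall x y, hinner (U x) (U y) = hinner x y) /\
  (forall y, exists x, U x = y).

Definition is_adjoint_of (U V : H -> H) : Prop :=
  forall x y, hinner (U x) y = hinner x (V y).

End HilbertDefs.

Arguments dom {H}.
Arguments hsub {H}.
Arguments hnorm {H}.
Arguments hconverges {H}.
Arguments linear_op {H}.
Arguments densely_defined {H}.
Arguments closed_op {H}.
Arguments symmetric_op {H}.
Arguments op_le {H}.
Arguments adjoint_graph {H}.
Arguments op_le_adjoint {H}.
Arguments self_adjoint {H}.
Arguments defect_space {H}.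
Arguments dim_one {H}.
Arguments deficiency_indices_1_1 {H}.
Arguments dissipative {H}.
Arguments maximal_dissipative {H}.
Arguments unitary {H}.
Arguments is_adjoint_of {H}.
Arguments app {H}.

(* The affine group: g(x) = a x + b with a > 0, encoded as (a, b).     *)
(* A continuous one-parameter subgroup {g_t} is given by continuous    *)
(* a, b : R -> R with a > 0 and g_s o g_t = g_(s+t).                   *)
Definition one_param_affine_subgroup (a b : R -> R) : Prop :=
  continuity a /\ continuity b /\ (forall t, 0 < a t) /\
  (forall s t, a (s + t) = a s * a t) /\
  (forall s t, b (s + t) = a s * b t + b s).

(* A strongly continuous unitary representation g_t |-> U t of the     *)
(* subgroup {g_t}: U only depends on the group element g_t.            *)
Definition strongly_cont_unitary_rep (H : HilbertSpace) (a b : R -> R)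
    (U : R -> H -> H) : Prop :=
  (forall t, unitary (U t)) /\
  (forall s t, a s = a t -> b s = b t -> U s = U t) /\
  (forall s t x, U (s + t) x = U s (U t x)) /\
  (forall (f : H) t eps, 0 < eps -> exists delta, 0 < delta /\
     forall s, Rabs (s - t) < delta -> hnorm (hsub (U s f) (U t f)) < eps).

Definition invariant_on (H : HilbertSpace) (a b : R -> R) (U : R -> H -> H)
    (T : R -> Prop) (A : Operator H) : Prop :=
  forall t, T t ->
    (forall f, dom A f -> dom A (U t f)) /\
    (forall f, dom A f -> exists g, dom A g /\ U t g = f) /\
    (forall V, is_adjoint_of (U t) V -> forall f, dom A f ->
       U t (app A (V f)) = hadd (hscal (RtoC (a t)) (app A f)) (hscal (RtoC (b t)) f)).

Definition cyclic_params (t0 : R) : R -> Prop :=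
  fun t => exists n : Z, t = IZR n * t0.
Arguments strongly_cont_unitary_rep {H}.
Arguments invariant_on {H}.

(* Von Neumann's formula makes Dom A^* / Dom Adot two-dimensional, with coordinates
   along the deficiency vectors.  The group acts on this quotient by a one-parameter
   group of 2x2 matrices M t, which multiply the boundary form (a hermitian form of
   signature (1,1) on the quotient) by 1 / a t.  Commuting matrices have a common
   eigenvector v.  If v were isotropic, Dom Adot + C v would be the domain of an
   invariant self-adjoint extension, so it is not; then its orthogonal line is a second
   common eigenline, and the ratio chi t of the two eigenvalues is a continuous unitary
   character of R.  It is nontrivial, since otherwise every M t would be scalar and
   every line, isotropic ones included, would be invariant.  Hence chi (4 s) = 1 for
   some s with chi s <> 1.  On the cyclic group generated by g_(4 s) the matrices are
   scalar, so the U t preserve every subspace between Dom Adot and Dom A^*, i.e. the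
   domain of every extension; and g_(4 s) is not the identity because chi s <> 1. *)

From Stdlib Require Import Reals ZArith Lra Psatz ClassicalEpsilon Classical.
From Coquelicot Require Import Coquelicot.

Set Implicit Arguments.
Local Open Scope R_scope.

Section HilbertAlgebra.
Context {H : HilbertSpace}.
Implicit Types x y z : H.

Lemma hadd_cancel_l x y z : hadd x y = hadd x z -> y = z.
Proof.
  intro E.
  rewrite <- (hadd_zero H y), <- (hadd_zero H z), <- (hadd_opp H x).
  rewrite (hadd_comm H x (hopp x)), !(hadd_assoc H), !(hadd_comm H _ (hopp x)).
  rewrite <- !(hadd_assoc H), (hadd_comm H y x), (hadd_comm H z x), E. reflexivity.
Qed.

Lemma hadd_zero_l x : hadd hzero x = x.
Proof. rewrite hadd_comm; apply hadd_zero. Qed.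

Lemma hscal_0 x : hscal (RtoC 0) x = hzero.
Proof.
  apply (hadd_cancel_l (hscal (RtoC 0) x)).
  rewrite hadd_zero, <- hscal_distr_r. f_equal. apply injective_projections; simpl; ring.
Qed.

Lemma hopp_scal x : hopp x = hscal (RtoC (-1)) x.
Proof.
  apply (hadd_cancel_l x). rewrite hadd_opp.
  rewrite <- (hscal_one H x) at 1. rewrite <- hscal_distr_r, <- (hscal_0 x).
  f_equal. apply injective_projections; simpl; ring.
Qed.

Lemma hscal_zero (c : C) : hscal c (@hzero H) = hzero.
Proof.
  rewrite <- (hscal_0 hzero), hscal_assoc. f_equal.
  apply injective_projections; simpl; ring.
Qed.

Lemma hsub_diag x : hsub x x = hzero.
Proof. apply hadd_opp. Qed.

Lemma hinner_zero_l y : hinner (@hzero H) y = RtoC 0.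
Proof.
  rewrite <- (hscal_0 hzero), hinner_scal_l.
  apply injective_projections; simpl; ring.
Qed.

Lemma hinner_add_r x y z : hinner x (hadd y z) = Cplus (hinner x y) (hinner x z).
Proof. rewrite hinner_conj, hinner_add_l, Cplus_conj, <- !hinner_conj. reflexivity. Qed.

Lemma hinner_scal_r (c : C) x y : hinner x (hscal c y) = Cmult (Cconj c) (hinner x y).
Proof. rewrite hinner_conj, hinner_scal_l, Cmult_conj, <- hinner_conj. reflexivity. Qed.

Lemma hinner_opp_l x y : hinner (hopp x) y = Copp (hinner x y).
Proof. rewrite hopp_scal, hinner_scal_l. apply injective_projections; simpl; ring. Qed.

Lemma hinner_opp_r x y : hinner x (hopp y) = Copp (hinner x y).
Proof. rewrite hopp_scal, hinner_scal_r. apply injective_projections; simpl; ring. Qed.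

Lemma hinner_zero_r x : hinner x (@hzero H) = RtoC 0.
Proof. rewrite hinner_conj, hinner_zero_l. apply injective_projections; simpl; ring. Qed.

Lemma hinner_diag_real x : hinner x x = RtoC (Re (hinner x x)).
Proof.
  pose proof (hinner_conj H x x) as E.
  destruct (hinner x x) as [p q]. unfold Cconj in E; simpl in *.
  injection E; intros. apply injective_projections; simpl; lra.
Qed.

Lemma eq_of_hinner_sub x y : hinner (hsub x y) (hsub x y) = RtoC 0 -> x = y.
Proof.
  intro E. apply hinner_definite in E. unfold hsub in E.
  rewrite <- (hadd_zero H x), <- (hadd_opp H y), (hadd_comm H y), hadd_assoc, E.
  apply hadd_zero_l.
Qed.

End HilbertAlgebra.

Ltac hexpand :=
  repeat first
   [ rewrite hinner_add_l | rewrite hinner_add_r | rewrite hinner_scal_l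
   | rewrite hinner_scal_r | rewrite hinner_opp_l | rewrite hinner_opp_r
   | rewrite hinner_zero_l | rewrite hinner_zero_r
   | rewrite Cplus_conj | rewrite Cmult_conj | rewrite Copp_conj | rewrite Cconj_conj
   | rewrite Cminus_conj ].

Ltac hexpand_in Z :=
  repeat first
   [ rewrite hinner_add_l in Z | rewrite hinner_add_r in Z | rewrite hinner_scal_l in Z
   | rewrite hinner_scal_r in Z | rewrite hinner_opp_l in Z | rewrite hinner_opp_r in Z
   | rewrite hinner_zero_l in Z | rewrite hinner_zero_r in Z
   | rewrite Cplus_conj in Z | rewrite Cmult_conj in Z | rewrite Copp_conj in Z
   | rewrite Cconj_conj in Z | rewrite Cminus_conj in Z ].

(* Two vectors are equal when the squared norm of their difference, expanded by
   sesquilinearity, is identically zero. *)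
Ltac solve_heq :=
  apply eq_of_hinner_sub; unfold hsub; hexpand;
  apply injective_projections; simpl; first [ring | field].

Section Norm.
Context {H : HilbertSpace}.
Implicit Types x y z : H.

Definition hnorm2 x := Re (hinner x x).

Lemma hnorm2_ge0 x : 0 <= hnorm2 x.
Proof. apply hinner_pos. Qed.

Lemma hnorm2_eq0 x : hnorm2 x = 0 -> x = hzero.
Proof.
  intro E. apply hinner_definite. rewrite hinner_diag_real. unfold hnorm2 in E. rewrite E. reflexivity.
Qed.

Lemma hnorm2_gt0 x : x <> hzero -> 0 < hnorm2 x.
Proof.
  intro Hx. destruct (Rle_lt_or_eq_dec _ _ (hnorm2_ge0 x)) as [|E]; auto.
  now elim Hx; apply hnorm2_eq0.
Qed.

Lemma Cmod_sq (c : C) : Cmod c ^ 2 = fst c ^ 2 + snd c ^ 2.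
Proof. unfold Cmod. rewrite pow2_sqrt; [reflexivity| nra]. Qed.

Lemma hnorm2_sub_proj x y : hnorm2 y <> 0 ->
  hnorm2 (hsub x (hscal (Cdiv (hinner x y) (RtoC (hnorm2 y))) y)) =
  hnorm2 x - Cmod (hinner x y) ^ 2 / hnorm2 y.
Proof.
  intro Hy. unfold hsub. unfold hnorm2 at 1. hexpand.
  rewrite (hinner_diag_real x), (hinner_diag_real y), (hinner_conj H y x), Cmod_sq.
  fold (hnorm2 x) (hnorm2 y) in *.
  destruct (hinner x y) as [u v]. simpl. field. auto.
Qed.

Lemma Cauchy_Schwarz_sq x y : Cmod (hinner x y) ^ 2 <= hnorm2 x * hnorm2 y.
Proof.
  destruct (Req_dec (hnorm2 y) 0) as [Hy|Hy].
  - rewrite Hy. apply hnorm2_eq0 in Hy. subst y. rewrite hinner_zero_r, Cmod_0. nra.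
  - pose proof (hnorm2_ge0 (hsub x (hscal (Cdiv (hinner x y) (RtoC (hnorm2 y))) y))) as P.
    rewrite hnorm2_sub_proj in P by exact Hy.
    assert (Hp : 0 < hnorm2 y) by (pose proof (hnorm2_ge0 y); lra).
    apply (Rmult_le_compat_r (hnorm2 y)) in P; [|lra].
    unfold Rdiv in P. rewrite Rmult_0_l, Rmult_minus_distr_r, Rmult_assoc, Rinv_l in P by lra. lra.
Qed.

Lemma hnorm_ge0 x : 0 <= hnorm x.
Proof. apply sqrt_pos. Qed.

Lemma hnorm_sq x : hnorm x ^ 2 = hnorm2 x.
Proof. unfold hnorm. rewrite pow2_sqrt; [reflexivity| apply hnorm2_ge0]. Qed.

Lemma hnorm_le_of_hnorm2 x y : hnorm2 x <= hnorm2 y -> hnorm x <= hnorm y.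
Proof. apply sqrt_le_1_alt. Qed.

Lemma Cauchy_Schwarz x y : Cmod (hinner x y) <= hnorm x * hnorm y.
Proof.
  apply Rsqr_incr_0_var; [|apply Rmult_le_pos; apply hnorm_ge0].
  unfold Rsqr. replace (hnorm x * hnorm y * (hnorm x * hnorm y)) with (hnorm x ^ 2 * hnorm y ^ 2) by ring.
  rewrite !hnorm_sq. pose proof (Cauchy_Schwarz_sq x y). simpl in *. lra.
Qed.

Lemma hnorm2_add x y : hnorm2 (hadd x y) = hnorm2 x + hnorm2 y + 2 * Re (hinner x y).
Proof.
  unfold hnorm2. hexpand. rewrite (hinner_conj H y x).
  destruct (hinner x y), (hinner x x), (hinner y y). simpl. ring.
Qed.

Lemma hnorm_triangle x y : hnorm (hadd x y) <= hnorm x + hnorm y.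
Proof.
  apply Rsqr_incr_0_var; [|pose proof (hnorm_ge0 x); pose proof (hnorm_ge0 y); lra].
  unfold Rsqr.
  replace (hnorm (hadd x y) * hnorm (hadd x y)) with (hnorm (hadd x y) ^ 2) by ring.
  replace ((hnorm x + hnorm y) * (hnorm x + hnorm y)) with
    (hnorm x ^ 2 + hnorm y ^ 2 + 2 * (hnorm x * hnorm y)) by ring.
  rewrite !hnorm_sq, hnorm2_add.
  pose proof (re_le_Cmod (hinner x y)). pose proof (Rle_abs (Re (hinner x y))).
  pose proof (Cauchy_Schwarz x y). lra.
Qed.

Lemma hnorm_scal (c : C) x : hnorm (hscal c x) = Cmod c * hnorm x.
Proof.
  unfold hnorm. replace (Re (hinner (hscal c x) (hscal c x))) with (Cmod c ^ 2 * hnorm2 x).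
  - rewrite sqrt_mult_alt, sqrt_pow2 by (apply pow2_ge_0 || apply Cmod_ge_0). reflexivity.
  - unfold hnorm2. hexpand. rewrite hinner_diag_real, Cmod_sq. destruct c. simpl. ring.
Qed.

Lemma hnorm_eq0 x : hnorm x = 0 -> x = hzero.
Proof. intro E. apply hnorm2_eq0. rewrite <- hnorm_sq, E. ring. Qed.

Lemma hnorm_hsub_sym x y : hnorm (hsub x y) = hnorm (hsub y x).
Proof.
  replace (hsub x y) with (hscal (RtoC (-1)) (hsub y x)) by solve_heq.
  rewrite hnorm_scal, Cmod_R, Rabs_left by lra. ring.
Qed.

Lemma hnorm_hsub_triangle x y z : hnorm (hsub x z) <= hnorm (hsub x y) + hnorm (hsub y z).
Proof.
  replace (hsub x z) with (hadd (hsub x y) (hsub y z)) by solve_heq. apply hnorm_triangle.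
Qed.

End Norm.

Lemma inv_succ_lt (e : R) : 0 < e -> exists N : nat, forall n, (N <= n)%nat -> / (INR n + 1) < e.
Proof.
  intro He. destruct (INR_archimed e 1 He) as [N HN]. exists N. intros n Hn.
  apply le_INR in Hn. pose proof (pos_INR N).
  apply (Rmult_lt_reg_r (INR n + 1)); [lra|]. rewrite Rinv_l by lra. nra.
Qed.

Lemma sqrt_lt_of_sq_lt (a e : R) : 0 <= a -> 0 < e -> a < e * e -> sqrt a < e.
Proof. intros Ha He Hae. rewrite <- (sqrt_square e) by lra. apply sqrt_lt_1; nra. Qed.

Lemma sq_le_of_approx (r d : R) : 0 <= r -> 0 <= d ->
  (forall eps, 0 < eps -> r <= sqrt (d + eps) + eps) -> r * r <= d.
Proof.
  intros Hr Hd Hyp. destruct (Rle_or_lt (r * r) d) as [|Hgt]; [assumption|exfalso].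
  set (g := r * r - d). set (K := sqrt (d + 1)).
  assert (HK : 0 <= K) by apply sqrt_pos.
  set (e := Rmin 1 (g / (2 * (2 * K + 2)))).
  assert (He : 0 < e).
  { unfold e. apply Rmin_glb_lt; [lra|]. unfold g. apply Rdiv_lt_0_compat; lra. }
  assert (He1 : e <= 1) by apply Rmin_l.
  assert (He2 : e <= g / (2 * (2 * K + 2))) by apply Rmin_r.
  specialize (Hyp e He). set (q := sqrt (d + e)) in Hyp.
  assert (Hq0 : 0 <= q) by apply sqrt_pos.
  assert (Hqq : q * q = d + e) by (apply sqrt_sqrt; lra).
  assert (HqK : q <= K) by (apply sqrt_le_1_alt; lra).
  assert (r * r <= (q + e) * (q + e)) by nra.
  assert (e * (2 * K + 2) <= g / 2).
  { apply (Rmult_le_compat_r (2 * K + 2)) in He2; [|lra].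
    replace (g / (2 * (2 * K + 2)) * (2 * K + 2)) with (g / 2) in He2 by (field; lra). lra. }
  unfold g in *. nra.
Qed.

Section Convergence.
Context {H : HilbertSpace}.
Implicit Types x y z : H.
Implicit Types u v : nat -> H.

Definition hcauchy u := forall eps, 0 < eps -> exists N, forall m n, (N <= m)%nat -> (N <= n)%nat ->
  hnorm (hsub (u m) (u n)) < eps.

Lemma hcauchy_converges u : hcauchy u -> exists x, hconverges u x.
Proof. apply (hcomplete H u). Qed.

Lemma hconverges_cauchy u x : hconverges u x -> hcauchy u.
Proof.
  intros C eps He. destruct (C (eps / 2)) as [N HN]; [lra|]. exists N. intros m n Hm Hn.
  pose proof (hnorm_hsub_triangle (u m) x (u n)). rewrite (hnorm_hsub_sym x (u n)) in H0.
  pose proof (HN m Hm). pose proof (HN n Hn). lra.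
Qed.

Lemma hsub_eq0 x y : hsub x y = hzero -> x = y.
Proof. intro E. apply eq_of_hinner_sub. rewrite E. apply hinner_zero_l. Qed.

Lemma eq_of_hsub_eq x y z : hsub x y = hsub z z -> x = y.
Proof. rewrite hsub_diag. apply hsub_eq0. Qed.

Lemma hnorm_arbitrarily_small x : (forall eps, 0 < eps -> hnorm x < eps) -> x = hzero.
Proof.
  intro Hs. apply hnorm_eq0. pose proof (hnorm_ge0 x).
  destruct (Req_dec (hnorm x) 0); auto. specialize (Hs (hnorm x)). lra.
Qed.

Lemma hconverges_unique u x y : hconverges u x -> hconverges u y -> x = y.
Proof.
  intros Cx Cy. apply hsub_eq0, hnorm_arbitrarily_small. intros eps He.
  destruct (Cx (eps / 2)) as [N1 H1]; [lra|]. destruct (Cy (eps / 2)) as [N2 H2]; [lra|].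
  specialize (H1 (max N1 N2) (Nat.le_max_l _ _)). specialize (H2 (max N1 N2) (Nat.le_max_r _ _)).
  pose proof (hnorm_hsub_triangle x (u (max N1 N2)) y). rewrite (hnorm_hsub_sym x (u _)) in H0. lra.
Qed.

Lemma hconverges_add u v x y : hconverges u x -> hconverges v y ->
  hconverges (fun n => hadd (u n) (v n)) (hadd x y).
Proof.
  intros Cx Cy eps He.
  destruct (Cx (eps / 2)) as [N1 H1]; [lra|]. destruct (Cy (eps / 2)) as [N2 H2]; [lra|].
  exists (max N1 N2). intros n Hn.
  specialize (H1 n (Nat.le_trans _ _ _ (Nat.le_max_l _ _) Hn)).
  specialize (H2 n (Nat.le_trans _ _ _ (Nat.le_max_r _ _) Hn)).
  replace (hsub (hadd (u n) (v n)) (hadd x y)) with (hadd (hsub (u n) x) (hsub (v n) y)) by solve_heq.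
  pose proof (hnorm_triangle (hsub (u n) x) (hsub (v n) y)). lra.
Qed.

Lemma hconverges_scal (c : C) u x : hconverges u x -> hconverges (fun n => hscal c (u n)) (hscal c x).
Proof.
  intros Cx eps He. pose proof (Cmod_ge_0 c).
  destruct (Cx (eps / (Cmod c + 1))) as [N HN]; [apply Rdiv_lt_0_compat; lra|].
  exists N. intros n Hn. specialize (HN n Hn).
  replace (hsub (hscal c (u n)) (hscal c x)) with (hscal c (hsub (u n) x)) by solve_heq.
  rewrite hnorm_scal. pose proof (hnorm_ge0 (hsub (u n) x)).
  apply Rle_lt_trans with ((Cmod c + 1) * hnorm (hsub (u n) x)); [nra|].
  apply (Rmult_lt_compat_l (Cmod c + 1)) in HN; [|lra].
  replace ((Cmod c + 1) * (eps / (Cmod c + 1))) with eps in HN by (field; lra). lra.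
Qed.

Lemma hconverges_ext u v x : (forall n, u n = v n) -> hconverges u x -> hconverges v x.
Proof. intros E C eps He. destruct (C eps He) as [N HN]. exists N. intros n Hn. rewrite <- E. auto. Qed.

Section Projection.
Variable S : H -> Prop.
Hypothesis S_zero : S hzero.
Hypothesis S_add : forall x y, S x -> S y -> S (hadd x y).
Hypothesis S_scal : forall (c : C) x, S x -> S (hscal c x).
Hypothesis S_closed : forall u x, (forall n, S (u n)) -> hconverges u x -> S x.

Lemma parallelogram y a b :
  hnorm2 (hsub a b) + 4 * hnorm2 (hsub y (hscal (RtoC (/ 2)) (hadd a b))) =
  2 * hnorm2 (hsub y a) + 2 * hnorm2 (hsub y b).
Proof. unfold hnorm2, hsub. hexpand. simpl. field. Qed.

Lemma distance_inf y : exists d, 0 <= d /\ (forall s, S s -> d <= hnorm2 (hsub y s)) /\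
  forall n : nat, exists s, S s /\ hnorm2 (hsub y s) < d + / (INR n + 1).
Proof.
  set (E := fun r => exists s, S s /\ r = - hnorm2 (hsub y s)).
  assert (Eb : bound E).
  { exists 0. intros r [s [_ ->]]. pose proof (hnorm2_ge0 (hsub y s)). lra. }
  assert (Ene : exists r, E r) by (exists (- hnorm2 (hsub y hzero)); exists hzero; auto).
  destruct (completeness E Eb Ene) as [m [Hub Hlub]].
  exists (- m). split; [|split].
  - assert (m <= 0); [|lra]. apply Hlub. intros r [s [_ ->]].
    pose proof (hnorm2_ge0 (hsub y s)). lra.
  - intros s Ss. assert (E (- hnorm2 (hsub y s))) by (exists s; auto). specialize (Hub _ H0). lra.
  - intro n. apply NNPP. intro Hn.
    assert (Hup : is_upper_bound E (m - / (INR n + 1))).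
    { intros r [s [Ss ->]]. apply Rnot_lt_le. intro Hlt. apply Hn. exists s. split; auto. lra. }
    specialize (Hlub _ Hup). pose proof (pos_INR n).
    assert (0 < / (INR n + 1)) by (apply Rinv_0_lt_compat; lra). lra.
Qed.

Lemma distance_minimizer y : exists p, S p /\ forall s, S s -> hnorm2 (hsub y p) <= hnorm2 (hsub y s).
Proof.
  destruct (distance_inf y) as [d [Hd0 [Hd Hex]]].
  destruct (choice _ Hex) as [sq Hsq].
  (* the parallelogram law makes a minimizing sequence Cauchy *)
  assert (Hcau : hcauchy sq).
  { intros eps He. destruct (@inv_succ_lt (eps * eps / 4)) as [N HN]; [apply Rdiv_lt_0_compat; nra|].
    exists N. intros m n Hm Hn. apply sqrt_lt_of_sq_lt; [apply hnorm2_ge0|lra|].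
    pose proof (parallelogram y (sq m) (sq n)) as P.
    destruct (Hsq m) as [S1 B1]. destruct (Hsq n) as [S2 B2].
    pose proof (Hd _ (S_scal (RtoC (/ 2)) (S_add S1 S2))).
    pose proof (HN m Hm). pose proof (HN n Hn).
    change (hnorm2 (hsub (sq m) (sq n)) < eps * eps). lra. }
  destruct (hcauchy_converges Hcau) as [p Hp].
  exists p. split; [exact (S_closed (fun n => proj1 (Hsq n)) Hp)|].
  intros s Ss. apply Rle_trans with d; [|exact (Hd s Ss)].
  rewrite <- hnorm_sq. replace (hnorm (hsub y p) ^ 2) with (hnorm (hsub y p) * hnorm (hsub y p)) by ring.
  apply sq_le_of_approx; [apply hnorm_ge0|assumption|].
  intros eps He. destruct (inv_succ_lt He) as [N1 H1]. destruct (Hp eps He) as [N2 H2].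
  set (n := max N1 N2).
  specialize (H1 n (Nat.le_max_l _ _)). specialize (H2 n (Nat.le_max_r _ _)).
  pose proof (hnorm_hsub_triangle y (sq n) p).
  assert (hnorm (hsub y (sq n)) <= sqrt (d + eps)).
  { apply sqrt_le_1_alt. destruct (Hsq n). fold (hnorm2 (hsub y (sq n))). lra. }
  lra.
Qed.

Lemma minimizer_orthogonal y p : S p ->
  (forall s, S s -> hnorm2 (hsub y p) <= hnorm2 (hsub y s)) ->
  forall s, S s -> hinner (hsub y p) s = RtoC 0.
Proof.
  intros Sp Hmin s Ss.
  set (c := hinner (hsub y p) s). set (t := / (hnorm2 s + 1)).
  pose proof (hnorm2_ge0 s).
  assert (Ht : 0 < t) by (apply Rinv_0_lt_compat; lra).
  (* perturbing p by t c s changes the squared distance by t |c|^2 (t |s|^2 - 2) *)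
  assert (Key : 0 <= t * (Cmod c ^ 2) * (t * hnorm2 s - 2)).
  { pose proof (Hmin _ (S_add Sp (S_scal (Cmult (RtoC t) c) Ss))) as Hle.
    replace (hnorm2 (hsub y (hadd p (hscal (Cmult (RtoC t) c) s)))) with
      (hnorm2 (hsub y p) + t * (Cmod c ^ 2) * (t * hnorm2 s - 2)) in Hle; [lra|].
    unfold hnorm2, c, hsub. rewrite Cmod_sq. hexpand.
    rewrite (hinner_conj H s y), (hinner_conj H s p), (hinner_conj H p y), (hinner_diag_real s).
    destruct (hinner y s), (hinner p s), (hinner y p). simpl. ring. }
  assert (Hts : t * hnorm2 s < 1).
  { unfold t. apply (Rmult_lt_reg_l (hnorm2 s + 1)); [lra|].
    rewrite <- Rmult_assoc, Rinv_r by lra. lra. }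
  assert (Cmod c ^ 2 <= 0).
  { destruct (Rle_or_lt (Cmod c ^ 2) 0) as [|Hpos]; [assumption|exfalso].
    assert (0 < t * Cmod c ^ 2) by (apply Rmult_lt_0_compat; lra). nra. }
  apply Cmod_eq_0. pose proof (Cmod_ge_0 c). nra.
Qed.

Lemma projection y : exists p, S p /\ forall s, S s -> hinner (hsub y p) s = RtoC 0.
Proof.
  destruct (distance_minimizer y) as [p [Sp Hmin]].
  exists p. split; [exact Sp|]. exact (minimizer_orthogonal y Sp Hmin).
Qed.

End Projection.
End Convergence.

Local Open Scope C_scope.

Ltac C_neq0 := let E := fresh in intro E; apply (f_equal (@fst R R)) in E; simpl in E; lra.

Lemma C_sqrt_exists (z : C) : exists s : C, s * s = z.
Proof.
  destruct z as [x y].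
  set (m := sqrt (x * x + y * y)).
  assert (Hm : (0 <= m)%R) by apply sqrt_pos.
  assert (Hmm : (m * m = x * x + y * y)%R) by (apply sqrt_sqrt; nra).
  assert (Hx1 : (x <= m)%R) by nra. assert (Hx2 : (- x <= m)%R) by nra.
  set (s1 := sqrt ((m + x) / 2)). set (s2 := sqrt ((m - x) / 2)).
  assert (E1 : (s1 * s1 = (m + x) / 2)%R) by (apply sqrt_sqrt; lra).
  assert (E2 : (s2 * s2 = (m - x) / 2)%R) by (apply sqrt_sqrt; lra).
  assert (P1 : (0 <= s1)%R) by apply sqrt_pos. assert (P2 : (0 <= s2)%R) by apply sqrt_pos.
  assert (E3 : ((s1 * s2) * (s1 * s2) = (y * y) / 4)%R).
  { replace ((s1 * s2) * (s1 * s2))%R with ((s1 * s1) * (s2 * s2))%R by ring. rewrite E1, E2.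
    field_simplify. nra. }
  assert (E4 : (s1 * s2 = Rabs y / 2)%R).
  { apply Rsqr_inj; [nra| |].
    - unfold Rdiv. apply Rmult_le_pos; [apply Rabs_pos|lra].
    - unfold Rsqr. rewrite E3. replace (Rabs y / 2 * (Rabs y / 2))%R with ((Rabs y * Rabs y) / 4)%R by field.
      rewrite <- Rabs_mult, Rabs_right by nra. reflexivity. }
  destruct (Rle_or_lt 0 y) as [Hy|Hy].
  - exists (s1, s2). rewrite Rabs_right in E4 by lra. apply injective_projections; simpl; nra.
  - exists (s1, - s2)%R. rewrite Rabs_left in E4 by lra. apply injective_projections; simpl; nra.
Qed.

Lemma Cmult_reg_r (l m v : C) : v <> 0 -> l * v = m * v -> l = m.
Proof.
  intros Hv E. replace l with (l * v / v) by (field; auto). rewrite E. field; auto.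
Qed.

Lemma Cmult_reg_l (l m v : C) : v <> 0 -> v * l = v * m -> l = m.
Proof. intros Hv E. apply (Cmult_reg_r Hv). rewrite !(Cmult_comm _ v). exact E. Qed.

Lemma C2i_neq0 : RtoC 2 * Ci <> 0.
Proof. intro E. apply (f_equal snd) in E. simpl in E. lra. Qed.

Lemma Cmult_integral (x y : C) : x * y = 0 -> x = 0 \/ y = 0.
Proof.
  intro E. destruct (classic (x = 0)) as [|Hx]; [left; auto | right].
  replace y with (/ x * (x * y)) by (field; auto). rewrite E. ring.
Qed.

Lemma Cconj_R (r : R) : Cconj (RtoC r) = RtoC r.
Proof. apply injective_projections; simpl; ring. Qed.

Lemma Cconj_neq0 (z : C) : z <> 0 -> Cconj z <> 0.
Proof. intros Hz E. apply Hz. rewrite <- (Cconj_conj z), E. apply injective_projections; simpl; ring. Qed.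

Lemma homogeneous_system_trivial (x y v1 v2 u1 u2 : C) :
  x * v1 + y * v2 = 0 -> x * u1 + y * u2 = 0 -> v1 * u2 - v2 * u1 <> 0 -> x = 0 /\ y = 0.
Proof.
  intros E1 E2 Hd. split; apply (Cmult_reg_r Hd).
  - replace (x * (v1 * u2 - v2 * u1)) with ((x * v1 + y * v2) * u2 - (x * u1 + y * u2) * v2) by ring.
    rewrite E1, E2. ring.
  - replace (y * (v1 * u2 - v2 * u1)) with ((x * u1 + y * u2) * v1 - (x * v1 + y * v2) * u1) by ring.
    rewrite E1, E2. ring.
Qed.

Lemma proportional_of_det0 (v1 v2 x1 x2 : C) : (v1 <> 0 \/ v2 <> 0) -> v1 * x2 - v2 * x1 = 0 ->
  exists mu, x1 = mu * v1 /\ x2 = mu * v2.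
Proof.
  intros Hv Hd. destruct (classic (v1 = 0)) as [H1|H1].
  - destruct Hv as [|H2]; [contradiction|]. subst v1. exists (x2 / v2). split; [|field; auto].
    assert (v2 * x1 = 0) as E.
    { replace (v2 * x1) with (- (0 * x2 - v2 * x1)) by ring. rewrite Hd. ring. }
    destruct (Cmult_integral E) as [|Hx]; [contradiction|]. rewrite Hx. ring.
  - exists (x1 / v1). split; [field; auto|].
    apply (Cmult_reg_r H1). replace (x1 / v1 * v2 * v1) with (x1 * v2) by (field; auto).
    replace (x2 * v1) with (v1 * x2 - v2 * x1 + v2 * x1) by ring. rewrite Hd. ring.
Qed.

Lemma matrix2_scalar_of_eigenbasis (m11 m12 m21 m22 l v1 v2 u1 u2 : C) :
  v1 * u2 - v2 * u1 <> 0 ->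
  m11 * v1 + m12 * v2 = l * v1 -> m21 * v1 + m22 * v2 = l * v2 ->
  m11 * u1 + m12 * u2 = l * u1 -> m21 * u1 + m22 * u2 = l * u2 ->
  m11 = l /\ m12 = 0 /\ m21 = 0 /\ m22 = l.
Proof.
  intros Hd E1 E2 F1 F2.
  destruct (@homogeneous_system_trivial (m11 - l) m12 v1 v2 u1 u2) as [R1 R2]; [| |exact Hd|].
  { rewrite <- (Cplus_opp_r (l * v1)), <- E1 at 1. ring. }
  { rewrite <- (Cplus_opp_r (l * u1)), <- F1 at 1. ring. }
  destruct (@homogeneous_system_trivial m21 (m22 - l) v1 v2 u1 u2) as [R3 R4]; [| |exact Hd|].
  { rewrite <- (Cplus_opp_r (l * v2)), <- E2 at 1. ring. }
  { rewrite <- (Cplus_opp_r (l * u2)), <- F2 at 1. ring. }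
  repeat split; auto.
  - rewrite <- (Cplus_0_l l), <- R1. ring.
  - rewrite <- (Cplus_0_l l), <- R4. ring.
Qed.

Lemma matrix2_eigenvector (m11 m12 m21 m22 : C) :
  exists l v1 v2 : C, (v1 <> 0 \/ v2 <> 0) /\
    m11 * v1 + m12 * v2 = l * v1 /\ m21 * v1 + m22 * v2 = l * v2.
Proof.
  destruct (C_sqrt_exists ((m11 - m22) * (m11 - m22) + 4 * m12 * m21)) as [s Hs].
  set (l := ((m11 + m22) + s) / 2).
  assert (Hl : (l - m11) * (l - m22) = m12 * m21).
  { assert (E : (l - m11) * (l - m22) * 4 = s * s - (m11 - m22) * (m11 - m22))
      by (unfold l; field; C_neq0).
    rewrite Hs in E. apply (Cmult_reg_r (v := 4)); [C_neq0|]. rewrite E. ring. }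
  destruct (classic (m12 = 0)) as [H12|H12].
  - subst m12. destruct (classic (m21 = 0)) as [H21|H21].
    + subst m21. exists m11, 1, 0. split; [left; C_neq0|]. split; ring.
    + exists l, (l - m22), m21. split; [right; auto|]. split; [|ring].
      replace (m11 * (l - m22) + 0 * m21) with (l * (l - m22) - (l - m11) * (l - m22)) by ring.
      rewrite Hl. ring.
  - exists l, m12, (l - m11). split; [left; auto|]. split; [ring|].
    replace (m21 * m12 + m22 * (l - m11)) with (l * (l - m11) - (l - m11) * (l - m22) + m12 * m21) by ring.
    rewrite Hl. ring.
Qed.

Section MatrixGroup.
Variables (M11 M12 M21 M22 : R -> C) (a : R -> R) (p q : R).
Hypothesis p_pos : (0 < p)%R.
Hypothesis q_pos : (0 < q)%R.
Hypothesis a_pos : forall t, (0 < a t)%R.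
Hypothesis a_add : forall s t, a (s + t)%R = (a s * a t)%R.
Hypothesis M11_add : forall s t, M11 (s + t)%R = M11 s * M11 t + M12 s * M21 t.
Hypothesis M12_add : forall s t, M12 (s + t)%R = M11 s * M12 t + M12 s * M22 t.
Hypothesis M21_add : forall s t, M21 (s + t)%R = M21 s * M11 t + M22 s * M21 t.
Hypothesis M22_add : forall s t, M22 (s + t)%R = M21 s * M12 t + M22 s * M22 t.

Definition act1 t (v1 v2 : C) := M11 t * v1 + M12 t * v2.
Definition act2 t (v1 v2 : C) := M21 t * v1 + M22 t * v2.

(* The hermitian form of signature (1,1) that the boundary form induces on the
   deficiency coordinates; p and q are the squared norms of the deficiency vectors. *)
Definition jform (v1 v2 w1 w2 : C) := RtoC p * (v1 * Cconj w1) - RtoC q * (v2 * Cconj w2).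

Hypothesis jform_act : forall t v1 v2 w1 w2,
  jform (act1 t v1 v2) (act2 t v1 v2) (act1 t w1 w2) (act2 t w1 w2) = RtoC (/ a t) * jform v1 v2 w1 w2.

Definition eigvec_at t (v1 v2 : C) := exists l : C, act1 t v1 v2 = l * v1 /\ act2 t v1 v2 = l * v2.
Definition common_eigvec (v1 v2 : C) := (v1 <> 0 \/ v2 <> 0) /\ forall t, eigvec_at t v1 v2.
Definition scalar_at t (l : C) := M11 t = l /\ M12 t = 0 /\ M21 t = 0 /\ M22 t = l.

Lemma act1_add s t v1 v2 : act1 (s + t)%R v1 v2 = act1 s (act1 t v1 v2) (act2 t v1 v2).
Proof. unfold act1, act2. rewrite M11_add, M12_add. ring. Qed.
Lemma act2_add s t v1 v2 : act2 (s + t)%R v1 v2 = act2 s (act1 t v1 v2) (act2 t v1 v2).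
Proof. unfold act1, act2. rewrite M21_add, M22_add. ring. Qed.

Lemma eigvec_at_scalar t l v1 v2 : scalar_at t l -> eigvec_at t v1 v2.
Proof. intros [E1 [E2 [E3 E4]]]. exists l. unfold act1, act2. rewrite E1, E2, E3, E4. split; ring. Qed.

(* The matrices commute, so M(t) maps an eigenvector of M(t1) to an eigenvector
   for the same eigenvalue; unless M(t1) is scalar that eigenspace is a line. *)
Lemma common_eigvec_exists : exists v1 v2 : C, common_eigvec v1 v2.
Proof.
  destruct (classic (forall t, exists l, scalar_at t l)) as [Hall|Hn].
  - exists 1, 0. split; [left; C_neq0|]. intro t. destruct (Hall t) as [l Hl].
    exact (eigvec_at_scalar _ _ Hl).
  - apply not_all_ex_not in Hn. destruct Hn as [t1 Ht1].
    destruct (matrix2_eigenvector (M11 t1) (M12 t1) (M21 t1) (M22 t1)) as [l [v1 [v2 [Hv [E1 E2]]]]].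
    change (act1 t1 v1 v2 = l * v1) in E1. change (act2 t1 v1 v2 = l * v2) in E2.
    exists v1, v2. split; [exact Hv|]. intro t.
    set (x1 := act1 t v1 v2). set (x2 := act2 t v1 v2).
    assert (X1 : act1 t1 x1 x2 = l * x1).
    { unfold x1, x2. rewrite <- act1_add, Rplus_comm, act1_add.
      rewrite E1, E2. unfold act1. ring. }
    assert (X2 : act2 t1 x1 x2 = l * x2).
    { unfold x1, x2. rewrite <- act2_add, Rplus_comm, act2_add.
      rewrite E1, E2. unfold act2. ring. }
    destruct (classic (v1 * x2 - v2 * x1 = 0)) as [Hd|Hd].
    + destruct (proportional_of_det0 Hv Hd) as [mu [M1 M2]]. exists mu. split; assumption.
    + exfalso. apply Ht1. exists l. exact (matrix2_scalar_of_eigenbasis Hd E1 E2 X1 X2).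
Qed.

Lemma jform_scal_l (l x1 x2 w1 w2 : C) : jform (l * x1) (l * x2) w1 w2 = l * jform x1 x2 w1 w2.
Proof. unfold jform. ring. Qed.
Lemma jform_scal_r (l x1 x2 w1 w2 : C) : jform x1 x2 (l * w1) (l * w2) = Cconj l * jform x1 x2 w1 w2.
Proof. unfold jform. rewrite !Cmult_conj. ring. Qed.

Lemma isotropic_orthogonal_proportional (v1 v2 x1 x2 : C) : (v1 <> 0 \/ v2 <> 0) ->
  jform v1 v2 v1 v2 = 0 -> jform v1 v2 x1 x2 = 0 -> exists mu, x1 = mu * v1 /\ x2 = mu * v2.
Proof.
  intros Hv E1 E2. unfold jform in E1, E2.
  assert (Hv2 : v2 <> 0).
  { intro Z. subst v2. destruct Hv as [Hv|Hv]; [|apply Hv; reflexivity].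
    assert (E : RtoC p * (v1 * Cconj v1) = 0) by (rewrite <- E1; ring).
    destruct (Cmult_integral E) as [E'|E']; [revert E'; C_neq0|].
    destruct (Cmult_integral E') as [E''|E'']; [exact (Hv E'')|exact (Cconj_neq0 Hv E'')]. }
  apply (proportional_of_det0 Hv).
  apply (f_equal Cconj) in E2. rewrite Cminus_conj, !Cmult_conj, !Cconj_conj, !Cconj_R in E2.
  replace (Cconj 0) with (RtoC 0) in E2 by (apply injective_projections; simpl; ring).
  assert (E3 : RtoC q * Cconj v2 * (v2 * x1 - v1 * x2) = 0).
  { replace (RtoC q * Cconj v2 * (v2 * x1 - v1 * x2)) with
      ((RtoC p * (v1 * Cconj v1) - RtoC q * (v2 * Cconj v2)) * (- x1) +
       (RtoC p * (Cconj v1 * x1) - RtoC q * (Cconj v2 * x2)) * v1) by ring.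
    rewrite E1, E2. ring. }
  destruct (Cmult_integral E3) as [E4|E4].
  - exfalso. destruct (Cmult_integral E4) as [E5|E5]; [revert E5; C_neq0|exact (Cconj_neq0 Hv2 E5)].
  - replace (v1 * x2 - v2 * x1) with (- (v2 * x1 - v1 * x2)) by ring. rewrite E4. ring.
Qed.

Lemma eigval_quotient t (w1 w2 l : C) : jform w1 w2 w1 w2 <> 0 ->
  act1 t w1 w2 = l * w1 -> act2 t w1 w2 = l * w2 ->
  l = jform (act1 t w1 w2) (act2 t w1 w2) w1 w2 / jform w1 w2 w1 w2.
Proof. intros Hn E1 E2. rewrite E1, E2, jform_scal_l. field. auto. Qed.

Lemma eigval_norm t (w1 w2 l : C) : jform w1 w2 w1 w2 <> 0 ->
  act1 t w1 w2 = l * w1 -> act2 t w1 w2 = l * w2 -> l * Cconj l = RtoC (/ a t).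
Proof.
  intros Hn E1 E2. pose proof (jform_act t w1 w2 w1 w2) as E.
  rewrite E1, E2, jform_scal_l, jform_scal_r in E.
  apply (Cmult_reg_r Hn). rewrite <- E. ring.
Qed.

Lemma eigval_neq0 t (w1 w2 l : C) : jform w1 w2 w1 w2 <> 0 ->
  act1 t w1 w2 = l * w1 -> act2 t w1 w2 = l * w2 -> l <> 0.
Proof.
  intros Hn E1 E2 El. pose proof (eigval_norm Hn E1 E2) as E. rewrite El in E.
  apply (f_equal fst) in E. simpl in E. pose proof (Rinv_0_lt_compat _ (a_pos t)). lra.
Qed.

Section NonIsotropic.
Variables v1 v2 : C.
Hypothesis v_common : common_eigvec v1 v2.
Hypothesis v_nonisotropic : jform v1 v2 v1 v2 <> 0.

(* (u1, u2) spans the jform-orthogonal complement of (v1, v2). *)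
Definition u1 := RtoC q * Cconj v2.
Definition u2 := RtoC p * Cconj v1.

Lemma jform_u_v : jform u1 u2 v1 v2 = 0.
Proof. unfold jform, u1, u2. ring. Qed.

Lemma det_u_x (x1 x2 : C) : u1 * x2 - u2 * x1 = - jform x1 x2 v1 v2.
Proof. unfold jform, u1, u2. ring. Qed.

Lemma det_v_u : v1 * u2 - v2 * u1 = jform v1 v2 v1 v2.
Proof. unfold jform, u1, u2. ring. Qed.

Lemma jform_u_nonisotropic : jform u1 u2 u1 u2 <> 0.
Proof.
  replace (jform u1 u2 u1 u2) with (- (RtoC p * RtoC q) * jform v1 v2 v1 v2)
    by (unfold jform, u1, u2; rewrite !Cmult_conj, !Cconj_conj, !Cconj_R; ring).
  intro E. destruct (Cmult_integral E) as [E'|E']; [|contradiction].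
  apply (f_equal fst) in E'. simpl in E'. nra.
Qed.

Lemma u_neq0 : u1 <> 0 \/ u2 <> 0.
Proof.
  destruct (classic (u1 = 0)) as [E1|E1]; [|left; auto].
  destruct (classic (u2 = 0)) as [E2|E2]; [|right; auto].
  elim v_nonisotropic. rewrite <- det_v_u, E1, E2. ring.
Qed.

Definition alpha t := jform (act1 t v1 v2) (act2 t v1 v2) v1 v2 / jform v1 v2 v1 v2.
Definition beta t := jform (act1 t u1 u2) (act2 t u1 u2) u1 u2 / jform u1 u2 u1 u2.

Lemma alpha_eig t : act1 t v1 v2 = alpha t * v1 /\ act2 t v1 v2 = alpha t * v2.
Proof.
  destruct (proj2 v_common t) as [l [E1 E2]].
  pose proof (eigval_quotient v_nonisotropic E1 E2) as El. subst l. auto.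
Qed.

(* The action preserves jform up to a factor, hence the jform-orthogonal line. *)
Lemma u_eigvec_at t : eigvec_at t u1 u2.
Proof.
  destruct (alpha_eig t) as [E1 E2].
  assert (Hz : jform (act1 t u1 u2) (act2 t u1 u2) v1 v2 = 0).
  { pose proof (jform_act t u1 u2 v1 v2) as E. rewrite jform_u_v, E1, E2, jform_scal_r in E.
    replace (RtoC (/ a t) * 0) with (RtoC 0) in E by ring.
    destruct (Cmult_integral E) as [E'|E']; auto.
    elim (Cconj_neq0 (eigval_neq0 v_nonisotropic E1 E2) E'). }
  apply (proportional_of_det0 u_neq0). rewrite det_u_x, Hz. ring.
Qed.

Lemma beta_eig t : act1 t u1 u2 = beta t * u1 /\ act2 t u1 u2 = beta t * u2.
Proof.
  destruct (u_eigvec_at t) as [l [E1 E2]].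
  pose proof (eigval_quotient jform_u_nonisotropic E1 E2) as El. subst l. auto.
Qed.

Lemma alpha_norm t : alpha t * Cconj (alpha t) = RtoC (/ a t).
Proof. destruct (alpha_eig t). apply (eigval_norm v_nonisotropic); auto. Qed.
Lemma beta_norm t : beta t * Cconj (beta t) = RtoC (/ a t).
Proof. destruct (beta_eig t). apply (eigval_norm jform_u_nonisotropic); auto. Qed.

Lemma alpha_add s t : alpha (s + t)%R = alpha s * alpha t.
Proof.
  destruct (alpha_eig t) as [E1 E2]. destruct (alpha_eig s) as [F1 F2].
  symmetry. apply (eigval_quotient (t := (s + t)%R) v_nonisotropic).
  - rewrite act1_add, E1, E2. transitivity (alpha t * act1 s v1 v2); [unfold act1; ring|]. rewrite F1; ring.
  - rewrite act2_add, E1, E2. transitivity (alpha t * act2 s v1 v2); [unfold act2; ring|]. rewrite F2; ring.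
Qed.
Lemma beta_add s t : beta (s + t)%R = beta s * beta t.
Proof.
  destruct (beta_eig t) as [E1 E2]. destruct (beta_eig s) as [F1 F2].
  symmetry. apply (eigval_quotient (t := (s + t)%R) jform_u_nonisotropic).
  - rewrite act1_add, E1, E2. transitivity (beta t * act1 s u1 u2); [unfold act1; ring|]. rewrite F1; ring.
  - rewrite act2_add, E1, E2. transitivity (beta t * act2 s u1 u2); [unfold act2; ring|]. rewrite F2; ring.
Qed.

(* Since |beta t|^2 = / a t, chi t = alpha t / beta t. *)
Definition chi t := alpha t * Cconj (beta t) * RtoC (a t).

Lemma chi_add s t : chi (s + t)%R = chi s * chi t.
Proof. unfold chi. rewrite alpha_add, beta_add, a_add, Cmult_conj, RtoC_mult. ring. Qed.

Lemma chi_unitary t : chi t * Cconj (chi t) = 1.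
Proof.
  unfold chi. rewrite !Cmult_conj, Cconj_conj, Cconj_R.
  replace (alpha t * Cconj (beta t) * RtoC (a t) * (Cconj (alpha t) * beta t * RtoC (a t)))
    with ((alpha t * Cconj (alpha t)) * (beta t * Cconj (beta t)) * RtoC (a t) * RtoC (a t)) by ring.
  rewrite alpha_norm, beta_norm. pose proof (a_pos t).
  apply injective_projections; simpl; field; lra.
Qed.

Lemma chi_eq1_scalar t : chi t = 1 -> scalar_at t (alpha t).
Proof.
  intro Hchi.
  assert (Hab : alpha t = beta t).
  { pose proof (beta_norm t) as Bn. pose proof (a_pos t).
    assert (E : (alpha t - beta t) * (Cconj (beta t) * RtoC (a t)) = 0).
    { replace ((alpha t - beta t) * (Cconj (beta t) * RtoC (a t))) with
        (chi t - (beta t * Cconj (beta t)) * RtoC (a t)) by (unfold chi; ring).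
      rewrite Hchi, Bn. apply injective_projections; simpl; field; lra. }
    destruct (Cmult_integral E) as [E'|E'].
    - rewrite <- (Cplus_0_l (beta t)), <- E'. ring.
    - exfalso. destruct (Cmult_integral E') as [E''|E'']; [|revert E''; C_neq0].
      rewrite <- (Cconj_conj (beta t)), E'', Cconj_R in Bn.
      apply (f_equal fst) in Bn. simpl in Bn. pose proof (Rinv_0_lt_compat _ (a_pos t)). lra. }
  destruct (alpha_eig t) as [E1 E2]. destruct (beta_eig t) as [F1 F2]. rewrite <- Hab in F1, F2.
  refine (matrix2_scalar_of_eigenbasis _ E1 E2 F1 F2). rewrite det_v_u. exact v_nonisotropic.
Qed.

Lemma chi_of_identity t : (forall w1 w2, act1 t w1 w2 = w1 /\ act2 t w1 w2 = w2) -> chi t = RtoC (a t).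
Proof.
  intro Hid.
  assert (Hone : forall l w1 w2 : C, (w1 <> 0 \/ w2 <> 0) -> act1 t w1 w2 = l * w1 ->
                   act2 t w1 w2 = l * w2 -> l = 1).
  { intros l w1 w2 Hw E1 E2. destruct (Hid w1 w2) as [I1 I2]. rewrite I1 in E1. rewrite I2 in E2.
    destruct Hw as [Hw|Hw]; apply (Cmult_reg_r Hw); [rewrite <- E1|rewrite <- E2]; ring. }
  destruct (alpha_eig t) as [E1 E2]. destruct (beta_eig t) as [F1 F2].
  unfold chi. rewrite (Hone _ _ _ (proj1 v_common) E1 E2), (Hone _ _ _ u_neq0 F1 F2).
  apply injective_projections; simpl; ring.
Qed.

End NonIsotropic.

Lemma isotropic_of_scalar : (forall t, exists l, scalar_at t l) ->
  common_eigvec (RtoC (sqrt q)) (RtoC (sqrt p)) /\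
  jform (RtoC (sqrt q)) (RtoC (sqrt p)) (RtoC (sqrt q)) (RtoC (sqrt p)) = 0.
Proof.
  intro Hs. split.
  - split; [left; pose proof (sqrt_lt_R0 q q_pos); C_neq0|].
    intro t. destruct (Hs t) as [l Hl]. exact (eigvec_at_scalar _ _ Hl).
  - unfold jform. rewrite !Cconj_R, <- !RtoC_mult, <- RtoC_minus.
    rewrite <- !Rmult_assoc, !(Rmult_assoc _ (sqrt q) (sqrt q)), !(Rmult_assoc _ (sqrt p) (sqrt p)).
    rewrite !sqrt_sqrt by lra. f_equal. ring.
Qed.

End MatrixGroup.

Definition Ccontinuous (f : R -> C) :=
  forall t, continuity_pt (fun s => fst (f s)) t /\ continuity_pt (fun s => snd (f s)) t.

Lemma Ccontinuous_const (c : C) : Ccontinuous (fun _ => c).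
Proof. intro t. split; apply continuity_pt_const; intros x y; reflexivity. Qed.

Lemma Ccontinuous_RtoC (f : R -> R) : continuity f -> Ccontinuous (fun s => RtoC (f s)).
Proof. intros Hf t. split; simpl; [apply Hf|]. apply continuity_pt_const; intros x y; reflexivity. Qed.

Lemma Ccontinuous_plus f g : Ccontinuous f -> Ccontinuous g -> Ccontinuous (fun s => f s + g s).
Proof.
  intros Hf Hg t. destruct (Hf t), (Hg t). split; simpl.
  - apply (continuity_pt_plus (fun s => fst (f s)) (fun s => fst (g s))); auto.
  - apply (continuity_pt_plus (fun s => snd (f s)) (fun s => snd (g s))); auto.
Qed.

Lemma Ccontinuous_mult f g : Ccontinuous f -> Ccontinuous g -> Ccontinuous (fun s => f s * g s).
Proof.
  intros Hf Hg t. destruct (Hf t) as [F1 F2], (Hg t) as [G1 G2]. split; simpl.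
  - apply (continuity_pt_minus (fun s => (fst (f s) * fst (g s))%R) (fun s => (snd (f s) * snd (g s))%R));
      apply continuity_pt_mult; auto.
  - apply (continuity_pt_plus (fun s => (fst (f s) * snd (g s))%R) (fun s => (snd (f s) * fst (g s))%R));
      apply continuity_pt_mult; auto.
Qed.

Lemma Ccontinuous_conj f : Ccontinuous f -> Ccontinuous (fun s => Cconj (f s)).
Proof.
  intros Hf t. destruct (Hf t). split; simpl; auto.
  apply (continuity_pt_opp (fun s => snd (f s))); auto.
Qed.

Lemma Ccontinuous_ext f g : (forall s, f s = g s) -> Ccontinuous f -> Ccontinuous g.
Proof.
  intros E Hf t. destruct (Hf t) as [F1 F2].
  split; [eapply continuity_pt_ext; [|exact F1] | eapply continuity_pt_ext; [|exact F2]];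
    intro s; simpl; rewrite E; reflexivity.
Qed.

Lemma continuity_pt_of_eps_delta (g : R -> R) t :
  (forall eps, (0 < eps)%R -> exists d, (0 < d)%R /\ forall s, (Rabs (s - t) < d -> Rabs (g s - g t) < eps)%R) ->
  continuity_pt g t.
Proof.
  intros Hg eps He. destruct (Hg eps He) as [d [Hd Hs]].
  exists d. split; auto. intros x [_ Hx]. apply Hs, Hx.
Qed.

Lemma Ccontinuous_of_Cmod (f : R -> C) :
  (forall t eps, (0 < eps)%R -> exists d, (0 < d)%R /\
     forall s, (Rabs (s - t) < d)%R -> (Cmod (f s - f t) < eps)%R) -> Ccontinuous f.
Proof.
  intros Hf t. split; apply continuity_pt_of_eps_delta; intros eps He;
    destruct (Hf t eps He) as [d [Hd Hs]]; exists d; split; auto; intros s Hst;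
    specialize (Hs s Hst); pose proof (Rmax_Cmod (f s - f t)) as Hm.
  - pose proof (Rmax_l (Rabs (fst (f s - f t))) (Rabs (snd (f s - f t)))).
    replace (fst (f s - f t)) with (fst (f s) - fst (f t))%R in * by (simpl; ring). lra.
  - pose proof (Rmax_r (Rabs (fst (f s - f t))) (Rabs (snd (f s - f t)))).
    replace (snd (f s - f t)) with (snd (f s) - snd (f t))%R in * by (simpl; ring). lra.
Qed.

Section UnitaryCharacter.
Variable r : R -> C.
Hypothesis r_add : forall s t, r (s + t)%R = r s * r t.
Hypothesis r_unitary : forall t, r t * Cconj (r t) = 1.

Lemma character_re_im t : (fst (r t) * fst (r t) + snd (r t) * snd (r t) = 1)%R.
Proof.
  specialize (r_unitary t). destruct (r t) as [x y].
  apply (f_equal fst) in r_unitary. simpl in *. nra.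
Qed.

Lemma character_0 : r 0 = 1.
Proof.
  pose proof (r_add 0 0) as E. rewrite Rplus_0_r in E.
  rewrite <- (r_unitary 0).
  transitivity (r 0 * (r 0 * Cconj (r 0))); [rewrite r_unitary; ring|].
  rewrite Cmult_assoc, <- E. reflexivity.
Qed.

Lemma character_Z_mult (T : R) : r T = 1 -> forall n : Z, r (IZR n * T)%R = 1.
Proof.
  intro HT. apply Z.peano_ind.
  - rewrite Rmult_0_l. apply character_0.
  - intros n IH. rewrite succ_IZR, Rmult_plus_distr_r, Rmult_1_l, r_add, IH, HT. ring.
  - intros n IH. rewrite <- IH. replace (IZR n * T)%R with (IZR (Z.pred n) * T + T)%R.
    + rewrite r_add, HT. ring.
    + rewrite <- Z.sub_1_r, minus_IZR. simpl. ring.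
Qed.

(* Re r(2t) = 2 (Re r t)^2 - 1, so if Re r stayed positive, 1 - Re r would at
   least double along t0, 2 t0, 4 t0, ... and eventually exceed 1. *)
Lemma character_re_nonpos : (exists t0, r t0 <> 1) -> exists s, (fst (r s) <= 0)%R.
Proof.
  intros [t0 Ht0]. apply NNPP. intro Hn.
  assert (Hpos : forall s, (0 < fst (r s))%R)
    by (intro s; apply Rnot_le_lt; intro; apply Hn; exists s; auto).
  assert (Hdouble : forall t, fst (r (2 * t)%R) = (2 * fst (r t) * fst (r t) - 1)%R).
  { intro t. replace (2 * t)%R with (t + t)%R by ring. rewrite r_add.
    pose proof (character_re_im t). destruct (r t) as [x y]. simpl in *. lra. }
  set (e := (1 - fst (r t0))%R).
  assert (He : (0 < e)%R).
  { unfold e. pose proof (character_re_im t0). destruct (Rle_or_lt 1 (fst (r t0))); [|lra].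
    exfalso. apply Ht0. destruct (r t0) as [x y]. simpl in *.
    assert (y = 0%R) by nra. assert (x = 1%R) by nra. subst. reflexivity. }
  assert (Hk : forall k : nat, ((INR k + 1) * e <= 1 - fst (r (2 ^ k * t0)%R))%R).
  { induction k.
    - simpl. replace (1 * t0)%R with t0 by ring. unfold e. lra.
    - rewrite S_INR. replace (2 ^ S k * t0)%R with (2 * (2 ^ k * t0))%R by (simpl; ring).
      rewrite Hdouble. set (x := fst (r (2 ^ k * t0)%R)) in *.
      pose proof (Hpos (2 ^ k * t0)%R). fold x in H.
      pose proof (pos_INR k). assert (0 <= INR k * e)%R by (apply Rmult_le_pos; lra).
      nra. }
  destruct (INR_archimed e 1 He) as [k Hk']. specialize (Hk k).
  pose proof (Hpos (2 ^ k * t0)%R). nra.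
Qed.

Lemma character_re_zero : continuity (fun t => fst (r t)) -> (exists t0, r t0 <> 1) ->
  exists z, fst (r z) = 0%R.
Proof.
  intros Hc Hn. destruct (character_re_nonpos Hn) as [s Hs].
  assert (Hf0 : fst (r 0%R) = 1%R) by (rewrite character_0; reflexivity).
  destruct (Req_dec (fst (r s)) 0) as [E|E]; [exists s; exact E|].
  destruct (Rle_or_lt 0 s) as [Hs0|Hs0].
  - destruct (IVT (fun t => - fst (r t))%R 0 s) as [z [Hz1 Hz2]]; try lra.
    + intro x. apply continuity_pt_opp, Hc.
    + destruct Hs0; auto. subst. lra.
    + exists z. lra.
  - destruct (IVT (fun t => fst (r t)) s 0) as [z [Hz1 Hz2]]; try lra.
    + exact Hc.
    + exists z. exact Hz2.
Qed.

(* A zero of Re r is a point where r = +i or -i, a primitive fourth root of unity. *)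
Lemma character_period : continuity (fun t => fst (r t)) -> (exists t0, r t0 <> 1) ->
  exists s, r s <> 1 /\ r (4 * s)%R = 1.
Proof.
  intros Hc Hn. destruct (character_re_zero Hc Hn) as [z Hz].
  exists z. split.
  - intro E. rewrite E in Hz. simpl in Hz. lra.
  - replace (4 * z)%R with (z + z + (z + z))%R by ring. rewrite !r_add.
    pose proof (character_re_im z). destruct (r z) as [x y]. simpl in *. subst x.
    apply injective_projections; simpl; nra.
Qed.

End UnitaryCharacter.

Local Close Scope C_scope.

Section SymmetricOperator.
Context {H : HilbertSpace} (Ad : Operator H).
Implicit Types x y z f g w : H.
Hypothesis Ad_linear : linear_op Ad.
Hypothesis Ad_dense : densely_defined Ad.
Hypothesis Ad_closed : closed_op Ad.
Hypothesis Ad_symmetric : symmetric_op Ad.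

Lemma dom_zero : dom Ad hzero.
Proof. apply Ad_linear. Qed.
Lemma dom_add x y : dom Ad x -> dom Ad y -> dom Ad (hadd x y).
Proof. apply Ad_linear. Qed.
Lemma dom_scal (c : C) x : dom Ad x -> dom Ad (hscal c x).
Proof. apply Ad_linear. Qed.
Lemma app_add x y : dom Ad x -> dom Ad y -> app Ad (hadd x y) = hadd (app Ad x) (app Ad y).
Proof. apply Ad_linear. Qed.
Lemma app_scal (c : C) x : dom Ad x -> app Ad (hscal c x) = hscal c (app Ad x).
Proof. apply Ad_linear. Qed.
Lemma dom_sub x y : dom Ad x -> dom Ad y -> dom Ad (hsub x y).
Proof. intros. unfold hsub. rewrite hopp_scal. auto using dom_add, dom_scal. Qed.
Lemma app_sub x y : dom Ad x -> dom Ad y -> app Ad (hsub x y) = hsub (app Ad x) (app Ad y).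
Proof. intros. unfold hsub. rewrite !hopp_scal, app_add, app_scal; auto using dom_scal. Qed.

Lemma orthogonal_dom_eq0 w : (forall x, dom Ad x -> hinner x w = RtoC 0) -> w = hzero.
Proof.
  intro Ho. apply hnorm_eq0. pose proof (hnorm_ge0 w).
  destruct (Req_dec (hnorm w) 0) as [|Hne]; auto. exfalso.
  destruct (Ad_dense w (eps := hnorm w)) as [x [Dx Hx]]; [lra|].
  assert (E : hinner w w = hinner (hsub w x) w).
  { unfold hsub. rewrite hinner_add_l, hinner_opp_l, (Ho x Dx). apply injective_projections; simpl; ring. }
  pose proof (Cauchy_Schwarz (hsub w x) w). rewrite <- E in H1.
  pose proof (re_le_Cmod (hinner w w)). pose proof (Rle_abs (Re (hinner w w))).
  fold (hnorm2 w) in H2, H3. rewrite <- hnorm_sq in H2, H3.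
  pose proof (hnorm_ge0 (hsub w x)). nra.
Qed.

Lemma adjoint_graph_add y1 z1 y2 z2 : adjoint_graph Ad y1 z1 -> adjoint_graph Ad y2 z2 ->
  adjoint_graph Ad (hadd y1 y2) (hadd z1 z2).
Proof. intros A1 A2 x Dx. rewrite !hinner_add_r, A1, A2 by auto. reflexivity. Qed.

Lemma adjoint_graph_scal (c : C) y z : adjoint_graph Ad y z -> adjoint_graph Ad (hscal c y) (hscal c z).
Proof. intros A1 x Dx. rewrite !hinner_scal_r, A1 by auto. reflexivity. Qed.

Lemma adjoint_graph_sub y1 z1 y2 z2 : adjoint_graph Ad y1 z1 -> adjoint_graph Ad y2 z2 ->
  adjoint_graph Ad (hsub y1 y2) (hsub z1 z2).
Proof.
  intros A1 A2. unfold hsub. rewrite !hopp_scal. apply adjoint_graph_add; auto using adjoint_graph_scal.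
Qed.

Lemma adjoint_graph_of_dom x : dom Ad x -> adjoint_graph Ad x (app Ad x).
Proof. intros Dx y Dy. apply Ad_symmetric; auto. Qed.

Lemma adjoint_graph_unique y z1 z2 : adjoint_graph Ad y z1 -> adjoint_graph Ad y z2 -> z1 = z2.
Proof.
  intros A1 A2. apply hsub_eq0, orthogonal_dom_eq0. intros x Dx. unfold hsub.
  rewrite hinner_add_r, hinner_opp_r, <- A1, <- A2 by auto.
  apply injective_projections; simpl; ring.
Qed.

Definition Dstar f := exists z, adjoint_graph Ad f z.
Definition Astar f := epsilon (inhabits hzero) (fun z => adjoint_graph Ad f z).

Lemma Astar_spec f : Dstar f -> adjoint_graph Ad f (Astar f).
Proof. intro D. unfold Astar. apply epsilon_spec. exact D. Qed.

Lemma Astar_eq f z : adjoint_graph Ad f z -> Astar f = z.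
Proof. intro A. apply (adjoint_graph_unique (y := f)); auto. apply Astar_spec. exists z; auto. Qed.

Lemma Dstar_of_dom x : dom Ad x -> Dstar x.
Proof. intro D. exists (app Ad x). apply adjoint_graph_of_dom; auto. Qed.

Lemma Astar_of_dom x : dom Ad x -> Astar x = app Ad x.
Proof. intro D. apply Astar_eq, adjoint_graph_of_dom; auto. Qed.

Lemma Dstar_add f g : Dstar f -> Dstar g -> Dstar (hadd f g).
Proof. intros [z1 A1] [z2 A2]. exists (hadd z1 z2). apply adjoint_graph_add; auto. Qed.
Lemma Dstar_scal (c : C) f : Dstar f -> Dstar (hscal c f).
Proof. intros [z1 A1]. exists (hscal c z1). apply adjoint_graph_scal; auto. Qed.
Lemma Astar_add f g : Dstar f -> Dstar g -> Astar (hadd f g) = hadd (Astar f) (Astar g).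
Proof. intros. apply Astar_eq. apply adjoint_graph_add; apply Astar_spec; auto. Qed.
Lemma Astar_scal (c : C) f : Dstar f -> Astar (hscal c f) = hscal c (Astar f).
Proof. intros. apply Astar_eq. apply adjoint_graph_scal; apply Astar_spec; auto. Qed.

Definition range_plus_i y := exists x, dom Ad x /\ y = hadd (app Ad x) (hscal Ci x).

Lemma hnorm2_plus_i x : dom Ad x ->
  hnorm2 (hadd (app Ad x) (hscal Ci x)) = hnorm2 (app Ad x) + hnorm2 x.
Proof.
  intro Dx. unfold hnorm2. hexpand. rewrite <- (Ad_symmetric x x Dx Dx). unfold Re; simpl. ring.
Qed.

Lemma hnorm_le_plus_i x : dom Ad x ->
  hnorm x <= hnorm (hadd (app Ad x) (hscal Ci x)) /\
  hnorm (app Ad x) <= hnorm (hadd (app Ad x) (hscal Ci x)).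
Proof.
  intro Dx. pose proof (hnorm2_plus_i x Dx). pose proof (hnorm2_ge0 x). pose proof (hnorm2_ge0 (app Ad x)).
  split; apply hnorm_le_of_hnorm2; lra.
Qed.

Lemma range_plus_i_closed u y : (forall n, range_plus_i (u n)) -> hconverges u y -> range_plus_i y.
Proof.
  intros Su Cu. destruct (choice _ Su) as [xs Hxs].
  assert (Hdiff : forall m n, dom Ad (hsub (xs m) (xs n)) /\
     hsub (u m) (u n) = hadd (app Ad (hsub (xs m) (xs n))) (hscal Ci (hsub (xs m) (xs n)))).
  { intros m n. destruct (Hxs m) as [D1 E1]. destruct (Hxs n) as [D2 E2].
    split; [apply dom_sub; auto|]. rewrite app_sub, E1, E2 by auto. solve_heq. }
  pose proof (hconverges_cauchy Cu) as Ccu.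
  assert (C1 : hcauchy xs /\ hcauchy (fun n => app Ad (xs n))).
  { split; intros eps He; destruct (Ccu eps He) as [N HN]; exists N; intros m n Hm Hn;
      specialize (HN m n Hm Hn); destruct (Hdiff m n) as [D3 E3]; rewrite E3 in HN;
      destruct (hnorm_le_plus_i _ D3) as [B1 B2].
    - lra.
    - rewrite <- app_sub by exact (proj1 (Hxs _)). lra. }
  destruct (hcauchy_converges (proj1 C1)) as [x Cx].
  destruct (hcauchy_converges (proj2 C1)) as [z Cz].
  destruct (Ad_closed (fun n => proj1 (Hxs n)) Cx Cz) as [Dx Ex].
  exists x. split; auto. apply (hconverges_unique Cu). rewrite Ex.
  apply (hconverges_ext (u := fun n => hadd (app Ad (xs n)) (hscal Ci (xs n)))).
  - intro n. symmetry. apply Hxs.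
  - apply hconverges_add; auto. apply hconverges_scal; auto.
Qed.

Lemma range_plus_i_subspace :
  range_plus_i hzero /\
  (forall y1 y2, range_plus_i y1 -> range_plus_i y2 -> range_plus_i (hadd y1 y2)) /\
  (forall (c : C) y, range_plus_i y -> range_plus_i (hscal c y)).
Proof.
  split; [|split].
  - exists hzero. split; [apply dom_zero|].
    rewrite <- (hscal_0 hzero), app_scal, !hscal_0, hscal_zero by apply dom_zero.
    symmetry. apply hadd_zero.
  - intros y1 y2 [x1 [D1 E1]] [x2 [D2 E2]]. exists (hadd x1 x2). split; [apply dom_add; auto|].
    rewrite app_add, E1, E2 by auto. solve_heq.
  - intros c y [x [D E]]. exists (hscal c x). split; [apply dom_scal; auto|].
    rewrite app_scal, E by auto. solve_heq.
Qed.

Lemma defect_of_orthogonal_range w : (forall s, range_plus_i s -> hinner w s = RtoC 0) ->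
  defect_space Ad Ci w.
Proof.
  intros Hort x Dx.
  assert (Hx : hinner w (hadd (app Ad x) (hscal Ci x)) = RtoC 0) by (apply Hort; exists x; auto).
  hexpand_in Hx. hexpand. rewrite (hinner_conj H w (app Ad x)), (hinner_conj H w x).
  apply (f_equal fst) in Hx as H1. apply (f_equal snd) in Hx as H2.
  simpl in H1, H2 |- *. apply injective_projections; simpl; lra.
Qed.

Section Deficiency.
Variables vp vm : H.
Hypothesis vp_neq0 : vp <> hzero.
Hypothesis vm_neq0 : vm <> hzero.
Hypothesis vp_defect : defect_space Ad Ci vp.
Hypothesis vm_defect : defect_space Ad (Copp Ci) vm.
Hypothesis vp_spans : forall w, defect_space Ad Ci w -> exists c : C, w = hscal c vp.
Hypothesis vm_spans : forall w, defect_space Ad (Copp Ci) w -> exists c : C, w = hscal c vm.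

Definition dvec (c1 c2 : C) := hadd (hscal c1 vp) (hscal c2 vm).

Lemma Dstar_vp : Dstar vp.
Proof. exists (hscal Ci vp). exact vp_defect. Qed.
Lemma Dstar_vm : Dstar vm.
Proof. exists (hscal (Copp Ci) vm). exact vm_defect. Qed.

Lemma Dstar_dvec c1 c2 : Dstar (dvec c1 c2).
Proof. apply Dstar_add; apply Dstar_scal; [apply Dstar_vp|apply Dstar_vm]. Qed.

Lemma Astar_sum f0 c1 c2 : dom Ad f0 ->
  Astar (hadd f0 (dvec c1 c2)) =
  hadd (app Ad f0) (hadd (hscal c1 (hscal Ci vp)) (hscal c2 (hscal (Copp Ci) vm))).
Proof.
  intro D. apply Astar_eq. apply adjoint_graph_add; [apply adjoint_graph_of_dom; auto|].
  apply adjoint_graph_add; apply adjoint_graph_scal; auto.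
Qed.

(* Project (A^* + i) f onto the closed range of Ad + i: the remainder spans the
   +i deficiency, which fixes the vp-component; what is left of f then lies in
   the -i deficiency space. *)
Lemma von_Neumann_decomposition f : Dstar f ->
  exists f0 c1 c2, dom Ad f0 /\ f = hadd f0 (dvec c1 c2).
Proof.
  intro Df. set (y := hadd (Astar f) (hscal Ci f)).
  destruct range_plus_i_subspace as [S0 [Sadd Sscal]].
  destruct (projection range_plus_i S0 Sadd Sscal range_plus_i_closed y) as [p [[f0 [Df0 Ep]] Hort]].
  destruct (vp_spans (defect_of_orthogonal_range _ Hort)) as [c Ec].
  set (k := Cmult c (@pair R R 0 (- / 2))).
  set (g := hsub (hsub f f0) (hscal k vp)).
  assert (Ag : adjoint_graph Ad g (hsub (hsub (Astar f) (app Ad f0)) (hscal k (hscal Ci vp)))).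
  { apply adjoint_graph_sub; [apply adjoint_graph_sub|].
    - apply Astar_spec; auto.
    - apply adjoint_graph_of_dom; auto.
    - apply adjoint_graph_scal; auto. }
  replace (hsub (hsub (Astar f) (app Ad f0)) (hscal k (hscal Ci vp))) with (hscal (Copp Ci) g) in Ag.
  2:{ symmetry. apply (eq_of_hsub_eq _ _ (hsub y p)). rewrite Ec at 2.
      unfold g, k, y. rewrite Ep. solve_heq. }
  destruct (vm_spans Ag) as [d Ed].
  exists f0, k, d. split; auto.
  apply (eq_of_hsub_eq _ _ g). rewrite Ed at 2. unfold g, dvec. solve_heq.
Qed.

Lemma hinner_app_vp x : dom Ad x -> hinner (app Ad x) vp = Cmult (Copp Ci) (hinner x vp).
Proof.
  intro D. rewrite (vp_defect _ D), hinner_scal_r. f_equal. apply injective_projections; simpl; ring.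
Qed.
Lemma hinner_app_vm x : dom Ad x -> hinner (app Ad x) vm = Cmult Ci (hinner x vm).
Proof.
  intro D. rewrite (vm_defect _ D), hinner_scal_r. f_equal. apply injective_projections; simpl; ring.
Qed.

(* The coordinates of f along vp and vm modulo Dom Ad, read off from
   <(A^* + i) f, vp> and <(A^* - i) f, vm>. *)
Definition coef_p f :=
  Cdiv (hinner (hadd (Astar f) (hscal Ci f)) vp) (Cmult (Cmult (RtoC 2) Ci) (RtoC (hnorm2 vp))).
Definition coef_m f :=
  Cdiv (hinner (hsub (Astar f) (hscal Ci f)) vm) (Cmult (Cmult (RtoC (-2)) Ci) (RtoC (hnorm2 vm))).

Lemma coef_sum f0 c1 c2 : dom Ad f0 ->
  coef_p (hadd f0 (dvec c1 c2)) = c1 /\ coef_m (hadd f0 (dvec c1 c2)) = c2.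
Proof.
  intro D. unfold coef_p, coef_m. rewrite Astar_sum by auto. unfold dvec, hsub. hexpand.
  rewrite (hinner_app_vp _ D), (hinner_app_vm _ D), (hinner_diag_real vp), (hinner_diag_real vm).
  fold (hnorm2 vp) (hnorm2 vm).
  pose proof (hnorm2_gt0 vp_neq0). pose proof (hnorm2_gt0 vm_neq0).
  split; apply injective_projections; simpl; field; lra.
Qed.

Lemma coef_dvec c1 c2 : coef_p (dvec c1 c2) = c1 /\ coef_m (dvec c1 c2) = c2.
Proof. rewrite <- (hadd_zero_l (dvec c1 c2)). apply coef_sum, dom_zero. Qed.

Lemma coef_of_dom x : dom Ad x -> coef_p x = RtoC 0 /\ coef_m x = RtoC 0.
Proof.
  intro D. replace x with (hadd x (dvec (RtoC 0) (RtoC 0))); [apply coef_sum; auto|].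
  unfold dvec. rewrite !hscal_0, !hadd_zero. reflexivity.
Qed.

Lemma coef_lin (k : C) f g : Dstar f -> Dstar g ->
  coef_p (hadd (hscal k f) g) = Cplus (Cmult k (coef_p f)) (coef_p g) /\
  coef_m (hadd (hscal k f) g) = Cplus (Cmult k (coef_m f)) (coef_m g).
Proof.
  intros Df Dg. unfold coef_p, coef_m.
  rewrite Astar_add, Astar_scal by auto using Dstar_scal. unfold hsub. hexpand.
  pose proof (hnorm2_gt0 vp_neq0). pose proof (hnorm2_gt0 vm_neq0).
  split; apply injective_projections; simpl; field; lra.
Qed.

Lemma decomposition f : Dstar f -> dom Ad (hsub f (dvec (coef_p f) (coef_m f))).
Proof.
  intro Df. destruct (von_Neumann_decomposition Df) as [f0 [c1 [c2 [D ->]]]].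
  destruct (coef_sum f0 c1 c2 D) as [-> ->].
  replace (hsub (hadd f0 (dvec c1 c2)) (dvec c1 c2)) with f0 by solve_heq. exact D.
Qed.

Lemma dom_of_coef0 f : Dstar f -> coef_p f = RtoC 0 -> coef_m f = RtoC 0 -> dom Ad f.
Proof.
  intros Df E1 E2. pose proof (decomposition Df) as D.
  rewrite E1, E2 in D. unfold dvec in D. rewrite !hscal_0, hadd_zero in D.
  replace f with (hsub f hzero); [exact D|]. solve_heq.
Qed.

Definition bform f g := Cminus (hinner (Astar f) g) (hinner f (Astar g)).

Lemma bform_coef f g : Dstar f -> Dstar g ->
  bform f g = Cmult (Cmult (RtoC 2) Ci)
    (jform (hnorm2 vp) (hnorm2 vm) (coef_p f) (coef_m f) (coef_p g) (coef_m g)).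
Proof.
  intros Df Dg. pose proof (decomposition Df) as Df0. pose proof (decomposition Dg) as Dg0.
  set (f0 := hsub f (dvec (coef_p f) (coef_m f))) in *.
  set (g0 := hsub g (dvec (coef_p g) (coef_m g))) in *.
  replace f with (hadd f0 (dvec (coef_p f) (coef_m f))) at 1 by (unfold f0; solve_heq).
  replace g with (hadd g0 (dvec (coef_p g) (coef_m g))) at 1 by (unfold g0; solve_heq).
  unfold bform, jform. rewrite !Astar_sum by auto. unfold dvec. hexpand.
  rewrite (Ad_symmetric f0 g0 Df0 Dg0), (hinner_app_vp _ Df0), (hinner_app_vm _ Df0).
  rewrite (hinner_conj H g0 vp), (hinner_conj H g0 vm), (hinner_conj H vp vm).
  rewrite (hinner_conj H (app Ad g0) vp), (hinner_conj H (app Ad g0) vm).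
  rewrite (hinner_app_vp _ Dg0), (hinner_app_vm _ Dg0), (hinner_diag_real vp), (hinner_diag_real vm).
  fold (hnorm2 vp) (hnorm2 vm).
  apply injective_projections; simpl; ring.
Qed.

Section Action.
Variables (a b : R -> R) (U : R -> H -> H).
Hypothesis affine_subgroup : one_param_affine_subgroup a b.
Hypothesis U_rep : strongly_cont_unitary_rep a b U.
Hypothesis Ad_invariant : invariant_on a b U (fun _ => True) Ad.

Lemma a_pos t : 0 < a t. Proof. apply affine_subgroup. Qed.
Lemma a_add s t : a (s + t) = a s * a t. Proof. apply affine_subgroup. Qed.
Lemma b_add s t : b (s + t) = a s * b t + b s. Proof. apply affine_subgroup. Qed.
Lemma a_0 : a 0 = 1.
Proof. pose proof (a_add 0 0) as E. rewrite Rplus_0_r in E. pose proof (a_pos 0). nra. Qed.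
Lemma b_0 : b 0 = 0.
Proof. pose proof (b_add 0 0) as E. rewrite Rplus_0_r, a_0 in E. lra. Qed.

Lemma U_add t x y : U t (hadd x y) = hadd (U t x) (U t y). Proof. apply (proj1 U_rep t). Qed.
Lemma U_scal t (c : C) x : U t (hscal c x) = hscal c (U t x). Proof. apply (proj1 U_rep t). Qed.
Lemma U_inner t x y : hinner (U t x) (U t y) = hinner x y. Proof. apply (proj1 U_rep t). Qed.
Lemma U_comp s t x : U (s + t) x = U s (U t x). Proof. apply U_rep. Qed.
Lemma U_sub t x y : U t (hsub x y) = hsub (U t x) (U t y).
Proof. unfold hsub. rewrite U_add, !hopp_scal, U_scal. reflexivity. Qed.

Lemma U_inj t x y : U t x = U t y -> x = y.
Proof.
  intro E. apply hsub_eq0, hinner_definite. rewrite <- (U_inner t), U_sub, E, hsub_diag.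
  apply hinner_zero_l.
Qed.

Lemma U_0 x : U 0 x = x.
Proof. apply (U_inj (t := 0)). rewrite <- U_comp, Rplus_0_r. reflexivity. Qed.

Lemma U_opp_r t x : U t (U (- t) x) = x.
Proof. rewrite <- U_comp, Rplus_opp_r. apply U_0. Qed.
Lemma U_opp_l t x : U (- t) (U t x) = x.
Proof. rewrite <- U_comp, Rplus_opp_l. apply U_0. Qed.

Lemma U_adjoint_of t : is_adjoint_of (U t) (U (- t)).
Proof. intros x y. rewrite <- (U_opp_r t y) at 1. apply U_inner. Qed.

Lemma adjoint_of_U t V y : is_adjoint_of (U t) V -> V y = U (- t) y.
Proof.
  intro HV. apply hsub_eq0, hinner_definite. unfold hsub.
  rewrite hinner_add_r, hinner_opp_r, <- HV, <- U_adjoint_of.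
  apply injective_projections; simpl; ring.
Qed.

Lemma dom_U t x : dom Ad x -> dom Ad (U t x).
Proof. apply (Ad_invariant I). Qed.

Lemma app_U t x : dom Ad x ->
  U t (app Ad (U (- t) x)) = hadd (hscal (RtoC (a t)) (app Ad x)) (hscal (RtoC (b t)) x).
Proof. intro D. apply (proj2 (proj2 (Ad_invariant I))); auto. apply U_adjoint_of. Qed.

Lemma adjoint_graph_U t y : Dstar y ->
  adjoint_graph Ad (U t y) (U t (hscal (RtoC (/ a t)) (hsub (Astar y) (hscal (RtoC (b t)) y)))).
Proof.
  intros Dy x Dx. set (x' := U (- t) x).
  assert (Dx' : dom Ad x') by (apply dom_U; auto).
  pose proof (app_U t x Dx) as E. fold x' in E. pose proof (a_pos t).
  assert (E2 : U (- t) (app Ad x) = hscal (RtoC (/ a t)) (hsub (app Ad x') (hscal (RtoC (b t)) x'))).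
  { apply (U_inj (t := t)). rewrite U_opp_r, U_scal, U_sub, E, U_scal. unfold x'. rewrite U_opp_r.
    solve_heq; lra. }
  rewrite <- (U_inner (- t) (app Ad x) (U t y)), U_opp_l.
  rewrite <- (U_inner (- t) x (U t _)), U_opp_l. fold x'.
  rewrite E2. pose proof (Astar_spec Dy _ Dx') as Ay.
  unfold hsub. hexpand. rewrite Ay. apply injective_projections; simpl; field; lra.
Qed.

Lemma Dstar_U t y : Dstar y -> Dstar (U t y).
Proof. intro Dy. eexists. apply adjoint_graph_U; auto. Qed.

Lemma Astar_U t y : Dstar y ->
  Astar (U t y) = U t (hscal (RtoC (/ a t)) (hsub (Astar y) (hscal (RtoC (b t)) y))).
Proof. intro Dy. apply Astar_eq, adjoint_graph_U; auto. Qed.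

Lemma bform_U t f g : Dstar f -> Dstar g -> bform (U t f) (U t g) = Cmult (RtoC (/ a t)) (bform f g).
Proof.
  intros Df Dg. unfold bform. rewrite !Astar_U, !U_inner by auto.
  unfold hsub. hexpand. apply injective_projections; simpl; ring.
Qed.

(* The matrix of U t acting on Dom A^* / Dom Ad in the basis (vp, vm). *)
Definition M11 t := coef_p (U t vp).
Definition M12 t := coef_p (U t vm).
Definition M21 t := coef_m (U t vp).
Definition M22 t := coef_m (U t vm).

Lemma coef_U t f : Dstar f ->
  coef_p (U t f) = act1 M11 M12 t (coef_p f) (coef_m f) /\
  coef_m (U t f) = act2 M21 M22 t (coef_p f) (coef_m f).
Proof.
  intro Df. pose proof (decomposition Df) as D.
  set (f0 := hsub f (dvec (coef_p f) (coef_m f))) in *.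
  assert (Ef : U t f = hadd (hscal (coef_p f) (U t vp)) (hadd (hscal (coef_m f) (U t vm)) (U t f0))).
  { unfold f0, dvec. rewrite U_sub, U_add, !U_scal. solve_heq. }
  pose proof (Dstar_U t Dstar_vp) as Dvp. pose proof (Dstar_U t Dstar_vm) as Dvm.
  assert (D0 : Dstar (U t f0)) by (apply Dstar_of_dom, dom_U; auto).
  destruct (coef_of_dom _ (dom_U t _ D)) as [Z1 Z2].
  destruct (coef_lin (coef_m f) Dvm D0) as [L1 L2].
  assert (D1 : Dstar (hadd (hscal (coef_m f) (U t vm)) (U t f0))) by auto using Dstar_add, Dstar_scal.
  destruct (coef_lin (coef_p f) Dvp D1) as [K1 K2].
  rewrite Ef, K1, K2, L1, L2, Z1, Z2. unfold act1, act2, M11, M12, M21, M22.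
  split; apply injective_projections; simpl; ring.
Qed.

Lemma M11_add s t : M11 (s + t) = Cplus (Cmult (M11 s) (M11 t)) (Cmult (M12 s) (M21 t)).
Proof. unfold M11 at 1. rewrite U_comp. apply (coef_U s (Dstar_U t Dstar_vp)). Qed.
Lemma M12_add s t : M12 (s + t) = Cplus (Cmult (M11 s) (M12 t)) (Cmult (M12 s) (M22 t)).
Proof. unfold M12 at 1. rewrite U_comp. apply (coef_U s (Dstar_U t Dstar_vm)). Qed.
Lemma M21_add s t : M21 (s + t) = Cplus (Cmult (M21 s) (M11 t)) (Cmult (M22 s) (M21 t)).
Proof. unfold M21 at 1. rewrite U_comp. apply (coef_U s (Dstar_U t Dstar_vp)). Qed.
Lemma M22_add s t : M22 (s + t) = Cplus (Cmult (M21 s) (M12 t)) (Cmult (M22 s) (M22 t)).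
Proof. unfold M22 at 1. rewrite U_comp. apply (coef_U s (Dstar_U t Dstar_vm)). Qed.

Lemma coef_U_dvec t v1 v2 :
  coef_p (U t (dvec v1 v2)) = act1 M11 M12 t v1 v2 /\ coef_m (U t (dvec v1 v2)) = act2 M21 M22 t v1 v2.
Proof. destruct (coef_U t (Dstar_dvec v1 v2)) as [-> ->]. destruct (coef_dvec v1 v2) as [-> ->]. auto. Qed.

Lemma jform_bform t (v1 v2 w1 w2 : C) :
  jform (hnorm2 vp) (hnorm2 vm) (act1 M11 M12 t v1 v2) (act2 M21 M22 t v1 v2) w1 w2 =
  Cmult (Cmult (RtoC (- / 2)) Ci) (bform (U t (dvec v1 v2)) (dvec w1 w2)).
Proof.
  rewrite bform_coef by auto using Dstar_U, Dstar_dvec.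
  destruct (coef_U_dvec t v1 v2) as [-> ->]. destruct (coef_dvec w1 w2) as [-> ->].
  generalize (jform (hnorm2 vp) (hnorm2 vm) (act1 M11 M12 t v1 v2) (act2 M21 M22 t v1 v2) w1 w2).
  intro X. apply injective_projections; simpl; field.
Qed.

Lemma jform_act t (v1 v2 w1 w2 : C) :
  jform (hnorm2 vp) (hnorm2 vm) (act1 M11 M12 t v1 v2) (act2 M21 M22 t v1 v2)
    (act1 M11 M12 t w1 w2) (act2 M21 M22 t w1 w2) =
  Cmult (RtoC (/ a t)) (jform (hnorm2 vp) (hnorm2 vm) v1 v2 w1 w2).
Proof.
  pose proof (bform_U t (Dstar_dvec v1 v2) (Dstar_dvec w1 w2)) as E.
  rewrite !bform_coef in E by auto using Dstar_U, Dstar_dvec.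
  destruct (coef_U_dvec t v1 v2) as [E1 E2]. destruct (coef_U_dvec t w1 w2) as [F1 F2].
  destruct (coef_dvec v1 v2) as [G1 G2]. destruct (coef_dvec w1 w2) as [K1 K2].
  rewrite E1, E2, F1, F2, G1, G2, K1, K2 in E.
  apply (Cmult_reg_l C2i_neq0). rewrite E. ring.
Qed.

Lemma hinner_U_continuous x y : Ccontinuous (fun t => hinner (U t x) y).
Proof.
  apply Ccontinuous_of_Cmod. intros t eps He. pose proof (hnorm_ge0 y).
  destruct (proj2 (proj2 (proj2 U_rep)) x t (eps / (hnorm y + 1))) as [d [Hd Hs]];
    [apply Rdiv_lt_0_compat; lra|].
  exists d. split; auto. intros s Hst. specialize (Hs s Hst).
  replace (Cminus (hinner (U s x) y) (hinner (U t x) y)) with (hinner (hsub (U s x) (U t x)) y)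
    by (unfold hsub; hexpand; apply injective_projections; simpl; ring).
  eapply Rle_lt_trans; [apply Cauchy_Schwarz|].
  pose proof (hnorm_ge0 (hsub (U s x) (U t x))).
  apply Rle_lt_trans with (hnorm (hsub (U s x) (U t x)) * (hnorm y + 1)); [nra|].
  apply (Rmult_lt_compat_r (hnorm y + 1)) in Hs; [|lra].
  replace (eps / (hnorm y + 1) * (hnorm y + 1)) with eps in Hs by (field; lra). exact Hs.
Qed.

Lemma bform_U_continuous f g : Dstar f -> Ccontinuous (fun t => bform (U t f) g).
Proof.
  intro Df.
  apply (Ccontinuous_ext (f := fun t =>
    Cplus (Cmult (RtoC (/ a t)) (hinner (U t (Astar f)) g))
      (Cplus (Cmult (RtoC (-1)) (Cmult (RtoC (/ a t)) (Cmult (RtoC (b t)) (hinner (U t f) g))))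
             (Cmult (RtoC (-1)) (hinner (U t f) (Astar g)))))).
  { intro t. unfold bform. rewrite Astar_U, U_scal, U_sub, U_scal by auto.
    unfold hsub. hexpand. apply injective_projections; simpl; ring. }
  assert (Ha : continuity (fun t => / a t)).
  { intro t. apply continuity_pt_inv; [apply affine_subgroup|]. pose proof (a_pos t). lra. }
  assert (Hb : continuity b) by apply affine_subgroup.
  repeat first
    [ apply Ccontinuous_plus | apply Ccontinuous_mult | apply Ccontinuous_const
    | apply Ccontinuous_RtoC; assumption | apply hinner_U_continuous ].
Qed.

Lemma jform_act_continuous (v1 v2 w1 w2 : C) :
  Ccontinuous (fun t => jform (hnorm2 vp) (hnorm2 vm) (act1 M11 M12 t v1 v2) (act2 M21 M22 t v1 v2) w1 w2).
Proof.
  apply (Ccontinuous_ext (f := fun t =>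
    Cmult (Cmult (RtoC (- / 2)) Ci) (bform (U t (dvec v1 v2)) (dvec w1 w2)))).
  { intro t. symmetry. apply jform_bform. }
  apply Ccontinuous_mult; [apply Ccontinuous_const|]. apply bform_U_continuous, Dstar_dvec.
Qed.

Lemma dom_shift_of_scalar t l : scalar_at M11 M12 M21 M22 t l ->
  forall f, Dstar f -> dom Ad (hsub (U t f) (hscal l f)).
Proof.
  intros [E11 [E12 [E21 E22]]] f Df.
  replace (hsub (U t f) (hscal l f)) with (hadd (hscal (Copp l) f) (U t f)) by solve_heq.
  destruct (coef_lin (Copp l) Df (Dstar_U t Df)) as [L1 L2].
  destruct (coef_U t Df) as [K1 K2].
  apply dom_of_coef0; [auto using Dstar_add, Dstar_scal, Dstar_U| |];
    [rewrite L1, K1 | rewrite L2, K2]; unfold act1, act2; rewrite ?E11, ?E12, ?E21, ?E22;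
    apply injective_projections; simpl; ring.
Qed.

Lemma Dstar_of_extension {A f} : op_le_adjoint A Ad -> dom A f -> Dstar f.
Proof. intros Hadj Df. exists (app A f). apply Hadj, Df. Qed.

Lemma dom_U_of_scalar A t l : linear_op A -> op_le Ad A -> op_le_adjoint A Ad ->
  scalar_at M11 M12 M21 M22 t l -> forall f, dom A f -> dom A (U t f).
Proof.
  intros LA [le_dom _] Hadj Hs f Df.
  replace (U t f) with (hadd (hsub (U t f) (hscal l f)) (hscal l f)) by solve_heq.
  apply LA; [apply le_dom, (dom_shift_of_scalar Hs), (Dstar_of_extension Hadj Df)|].
  apply LA, Df.
Qed.

(* Between Ad and A^*, the operator relation U A U^* = a A + b holds automatically;
   only the invariance of the domain has to be checked. *)
Lemma extension_invariant_on A (T : R -> Prop) : op_le_adjoint A Ad ->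
  (forall t, T t -> T (- t)) -> (forall t, T t -> forall f, dom A f -> dom A (U t f)) ->
  invariant_on a b U T A.
Proof.
  intros Hadj HT Hdom t Tt. split; [auto|split].
  - intros f Df. exists (U (- t) f). split; [apply Hdom; auto|apply U_opp_r].
  - intros V HV f Df. rewrite (adjoint_of_U f HV).
    set (y := U (- t) f).
    assert (Dy : dom A y) by (apply Hdom; auto).
    assert (Ey : app A y = Astar y) by (symmetry; apply Astar_eq, Hadj, Dy).
    assert (Ef : app A f = Astar f) by (symmetry; apply Astar_eq, Hadj, Df).
    pose proof (Astar_U t (Dstar_of_extension Hadj Dy)) as E.
    assert (Uy : U t y = f) by apply U_opp_r.
    rewrite Ey, Ef, <- Uy, E, U_scal, U_sub, U_scal. pose proof (a_pos t). solve_heq; lra.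
Qed.

Section IsotropicExtension.
Variables v1 v2 : C.
Hypothesis v_common : common_eigvec M11 M12 M21 M22 v1 v2.
Hypothesis v_isotropic : jform (hnorm2 vp) (hnorm2 vm) v1 v2 v1 v2 = RtoC 0.

Definition ext_dom f := exists x0 (k : C), dom Ad x0 /\ f = hadd x0 (hscal k (dvec v1 v2)).
Definition ext_op : Operator H := {| dom := ext_dom; app := Astar |}.

Lemma ext_dom_Dstar f : ext_dom f -> Dstar f.
Proof.
  intros [x0 [k [D ->]]]. apply Dstar_add; [apply Dstar_of_dom; auto|apply Dstar_scal, Dstar_dvec].
Qed.

Lemma ext_dom_coef f : ext_dom f ->
  exists k : C, coef_p f = Cmult k v1 /\ coef_m f = Cmult k v2.
Proof.
  intros [x0 [k [D ->]]]. exists k. rewrite hadd_comm.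
  destruct (coef_lin k (Dstar_dvec v1 v2) (Dstar_of_dom _ D)) as [-> ->].
  destruct (coef_of_dom _ D) as [-> ->]. destruct (coef_dvec v1 v2) as [-> ->].
  split; apply injective_projections; simpl; ring.
Qed.

Lemma bform_ext_dom f g : ext_dom f -> ext_dom g -> bform f g = RtoC 0.
Proof.
  intros Df Dg. rewrite bform_coef by auto using ext_dom_Dstar.
  destruct (ext_dom_coef Df) as [k [-> ->]]. destruct (ext_dom_coef Dg) as [k' [-> ->]].
  rewrite jform_scal_l, jform_scal_r, v_isotropic. apply injective_projections; simpl; ring.
Qed.

Lemma ext_op_linear : linear_op ext_op.
Proof.
  split; [|split; [|split; [|split]]]; simpl.
  - exists hzero, (RtoC 0). split; [apply dom_zero|]. rewrite hscal_0, hadd_zero. reflexivity.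
  - intros x y [x0 [k [D1 ->]]] [y0 [k' [D2 ->]]]. exists (hadd x0 y0), (Cplus k k').
    split; [apply dom_add; auto|solve_heq].
  - intros c x [x0 [k [D1 ->]]]. exists (hscal c x0), (Cmult c k).
    split; [apply dom_scal; auto|solve_heq].
  - intros x y Dx Dy. apply Astar_add; apply ext_dom_Dstar; auto.
  - intros c x Dx. apply Astar_scal, ext_dom_Dstar; auto.
Qed.

Lemma Ad_le_ext_op : op_le Ad ext_op.
Proof.
  split; simpl.
  - intros x D. exists x, (RtoC 0). split; auto. rewrite hscal_0, hadd_zero. reflexivity.
  - intros x D. apply Astar_of_dom; auto.
Qed.

(* The adjoint of ext_op is a restriction of A^*, and the boundary form against
   dvec v1 v2 forces its coordinates onto the isotropic line. *)
Lemma ext_dom_of_adjoint y z : adjoint_graph ext_op y z -> ext_dom y /\ Astar y = z.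
Proof.
  intro Hadj.
  assert (Ha : adjoint_graph Ad y z).
  { intros x Dx. rewrite <- (Astar_of_dom _ Dx). apply (Hadj x), Ad_le_ext_op, Dx. }
  assert (Dy : Dstar y) by (exists z; auto).
  assert (Ez : Astar y = z) by (apply Astar_eq; auto).
  split; [|exact Ez].
  assert (Dw : ext_dom (dvec v1 v2)).
  { exists hzero, (RtoC 1). split; [apply dom_zero|]. rewrite hscal_one, hadd_zero_l. reflexivity. }
  assert (Eb : bform (dvec v1 v2) y = RtoC 0).
  { pose proof (Hadj _ Dw) as Hw. simpl in Hw. unfold bform. rewrite Hw, Ez.
    apply injective_projections; simpl; ring. }
  rewrite bform_coef in Eb by auto using Dstar_dvec.
  destruct (coef_dvec v1 v2) as [E1 E2]. rewrite E1, E2 in Eb.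
  destruct (Cmult_integral Eb) as [E|E]; [elim (C2i_neq0 E)|].
  destruct (isotropic_orthogonal_proportional (hnorm2_gt0 vp_neq0) (hnorm2_gt0 vm_neq0)
              (proj1 v_common) v_isotropic E) as [mu [M1 M2]].
  exists (hsub y (hscal mu (dvec v1 v2))), mu. split; [|solve_heq].
  replace (hsub y (hscal mu (dvec v1 v2))) with (hadd (hscal (RtoC (-1)) (hscal mu (dvec v1 v2))) y)
    by solve_heq.
  destruct (coef_lin (RtoC (-1)) (Dstar_scal mu (Dstar_dvec v1 v2)) Dy) as [L1 L2].
  destruct (coef_lin mu (Dstar_dvec v1 v2) (Dstar_of_dom _ dom_zero)) as [K1 K2].
  rewrite hadd_zero in K1, K2. destruct (coef_of_dom _ dom_zero) as [Z1 Z2].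
  apply dom_of_coef0; auto using Dstar_add, Dstar_scal, Dstar_dvec;
    [rewrite L1, K1, E1, Z1, M1 | rewrite L2, K2, E2, Z2, M2];
    apply injective_projections; simpl; ring.
Qed.

Lemma ext_op_self_adjoint : self_adjoint ext_op.
Proof.
  split; [apply ext_op_linear|split].
  - intros x eps He. destruct (Ad_dense x He) as [y [Dy Hy]]. exists y. split; auto. apply Ad_le_ext_op; auto.
  - intros y z. split; [apply ext_dom_of_adjoint|]. intros [Dy <-] x Dx. simpl in *.
    pose proof (bform_ext_dom Dx Dy) as E. unfold bform in E.
    rewrite <- (Cplus_0_l (hinner x (Astar y))), <- E. apply injective_projections; simpl; ring.
Qed.

Lemma ext_dom_U t f : ext_dom f -> ext_dom (U t f).
Proof.
  intros [x0 [k [D ->]]]. destruct (proj2 v_common t) as [l [E1 E2]].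
  set (d := hsub (U t (dvec v1 v2)) (hscal l (dvec v1 v2))).
  assert (Dd : dom Ad d).
  { unfold d. replace (hsub (U t (dvec v1 v2)) (hscal l (dvec v1 v2))) with
      (hadd (hscal (Copp l) (dvec v1 v2)) (U t (dvec v1 v2))) by solve_heq.
    destruct (coef_lin (Copp l) (Dstar_dvec v1 v2) (Dstar_U t (Dstar_dvec v1 v2))) as [L1 L2].
    destruct (coef_U_dvec t v1 v2) as [K1 K2]. destruct (coef_dvec v1 v2) as [F1 F2].
    apply dom_of_coef0; auto using Dstar_add, Dstar_scal, Dstar_dvec, Dstar_U;
      [rewrite L1, K1, E1, F1 | rewrite L2, K2, E2, F2]; apply injective_projections; simpl; ring. }
  exists (hadd (U t x0) (hscal k d)), (Cmult k l). split.
  - apply dom_add; [apply dom_U; auto|apply dom_scal; auto].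
  - rewrite U_add, U_scal. unfold d. solve_heq.
Qed.

Lemma isotropic_invariant_extension :
  exists B : Operator H, op_le Ad B /\ self_adjoint B /\ invariant_on a b U (fun _ => True) B.
Proof.
  exists ext_op. split; [apply Ad_le_ext_op|split; [apply ext_op_self_adjoint|]].
  apply extension_invariant_on; auto.
  - intros y Dy. apply Astar_spec, ext_dom_Dstar, Dy.
  - intros t _ f Df. apply ext_dom_U, Df.
Qed.

End IsotropicExtension.

Section NoInvariantSelfAdjointExtension.
Hypothesis no_invariant_sa : ~ exists B : Operator H,
  op_le Ad B /\ self_adjoint B /\ invariant_on a b U (fun _ => True) B.

Lemma common_eigvec_nonisotropic v1 v2 : common_eigvec M11 M12 M21 M22 v1 v2 ->
  jform (hnorm2 vp) (hnorm2 vm) v1 v2 v1 v2 <> RtoC 0.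
Proof. intros Hc Hiso. exact (no_invariant_sa (isotropic_invariant_extension Hc Hiso)). Qed.

Section CommonEigenvector.
Context {v1 v2 : C}.
Hypothesis v_common : common_eigvec M11 M12 M21 M22 v1 v2.

Let p_pos := hnorm2_gt0 vp_neq0.
Let q_pos := hnorm2_gt0 vm_neq0.
Let v_nonisotropic := common_eigvec_nonisotropic v_common.
Local Notation chi_v := (chi M11 M12 M21 M22 a (hnorm2 vp) (hnorm2 vm) v1 v2).

Lemma chi_v_add s t : chi_v (s + t) = Cmult (chi_v s) (chi_v t).
Proof.
  exact (chi_add a p_pos q_pos a_pos a_add M11_add M12_add M21_add M22_add jform_act
           v_common v_nonisotropic s t).
Qed.

Lemma chi_v_unitary t : Cmult (chi_v t) (Cconj (chi_v t)) = RtoC 1.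
Proof. exact (chi_unitary a p_pos q_pos a_pos jform_act v_common v_nonisotropic t). Qed.

Lemma chi_v_continuous : continuity (fun t => fst (chi_v t)).
Proof.
  assert (Hc : Ccontinuous chi_v).
  { unfold chi, alpha, beta, Cdiv.
    repeat first
      [ apply Ccontinuous_mult | apply Ccontinuous_conj | apply Ccontinuous_const
      | apply Ccontinuous_RtoC, affine_subgroup | apply jform_act_continuous ]. }
  intro t. exact (proj1 (Hc t)).
Qed.

(* If chi were trivial, every U t would act on Dom A^* / Dom Ad as a scalar, and
   that action has an isotropic eigenvector. *)
Lemma chi_v_nontrivial : exists t, chi_v t <> RtoC 1.
Proof.
  apply NNPP. intro Hall.
  assert (Hsc : forall t, exists l, scalar_at M11 M12 M21 M22 t l).
  { intro t. exists (alpha M11 M12 M21 M22 (hnorm2 vp) (hnorm2 vm) v1 v2 t).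
    apply (chi_eq1_scalar p_pos q_pos a_pos jform_act v_common v_nonisotropic).
    apply NNPP. intro Ht. apply Hall. exists t. exact Ht. }
  destruct (isotropic_of_scalar p_pos q_pos Hsc) as [Hc Hiso].
  exact (common_eigvec_nonisotropic Hc Hiso).
Qed.

Lemma period_nontrivial s : chi_v s <> RtoC 1 -> a (4 * s) <> 1 \/ b (4 * s) <> 0.
Proof.
  intro Hs. apply NNPP. intro Hab. apply not_or_and in Hab. destruct Hab as [Ha4 Hb4].
  apply NNPP in Ha4. apply NNPP in Hb4.
  replace (4 * s) with ((s + s) + (s + s)) in Ha4, Hb4 by ring.
  rewrite !a_add in Ha4. rewrite !b_add, !a_add in Hb4.
  assert (Has : a s = 1).
  { pose proof (a_pos s). assert (a s * a s = 1) by nra. nra. }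
  assert (Hbs : b s = 0) by (rewrite Has in Hb4; lra).
  assert (HU : U s = U 0) by (apply U_rep; [rewrite a_0|rewrite b_0]; auto).
  apply Hs. rewrite (chi_of_identity a p_pos q_pos a_pos jform_act v_common v_nonisotropic), Has;
    [reflexivity|].
  intros w1 w2. destruct (coef_U_dvec s w1 w2) as [<- <-]. rewrite HU.
  replace (U 0 (dvec w1 w2)) with (dvec w1 w2) by (symmetry; apply U_0). apply coef_dvec.
Qed.

Lemma extension_invariant_at_period T : chi_v T = RtoC 1 ->
  forall A, linear_op A -> op_le Ad A -> op_le_adjoint A Ad -> invariant_on a b U (cyclic_params T) A.
Proof.
  intros HT A LA Hle Hadj. apply extension_invariant_on; [exact Hadj| |].
  - intros t [n ->]. exists (- n)%Z. rewrite opp_IZR. ring.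
  - intros t [n ->].
    pose proof (character_Z_mult _ chi_v_add chi_v_unitary _ HT n) as Hn.
    exact (dom_U_of_scalar LA Hle Hadj
             (chi_eq1_scalar p_pos q_pos a_pos jform_act v_common v_nonisotropic Hn)).
Qed.

End CommonEigenvector.

Lemma cyclic_invariance_of_all_extensions : exists t0 : R, (a t0 <> 1 \/ b t0 <> 0) /\
  forall A : Operator H, maximal_dissipative A -> op_le Ad A -> op_le_adjoint A Ad ->
    invariant_on a b U (cyclic_params t0) A.
Proof.
  destruct (common_eigvec_exists M11 M12 M21 M22 M11_add M12_add M21_add M22_add) as [v1 [v2 Hc]].
  destruct (character_period _ (chi_v_add Hc) (chi_v_unitary Hc)
              chi_v_continuous (chi_v_nontrivial Hc)) as [s [Hs1 Hs4]].
  exists (4 * s). split; [apply (period_nontrivial Hc), Hs1|].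
  intros A [[LA _] _]. eapply extension_invariant_at_period; eassumption.
Qed.

End NoInvariantSelfAdjointExtension.

End Action.
End Deficiency.
End SymmetricOperator.

Theorem theorem6p5 (H : HilbertSpace) (a b : R -> R) (U : R -> H -> H)
  (Adot : Operator H) :
  one_param_affine_subgroup a b ->
  strongly_cont_unitary_rep a b U ->
  linear_op Adot -> densely_defined Adot -> closed_op Adot -> symmetric_op Adot ->
  deficiency_indices_1_1 Adot ->
  invariant_on a b U (fun _ => True) Adot ->
  ~ (exists B : Operator H, op_le Adot B /\ self_adjoint B /\
        invariant_on a b U (fun _ => True) B) ->
  exists t0 : R, (a t0 <> 1%R \/ b t0 <> 0%R) /\
    forall A : Operator H, maximal_dissipative A -> op_le Adot A -> op_le_adjoint A Adot ->
      invariant_on a b U (cyclic_params t0) A.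
Proof.
  intros Hgrp Hrep Hlin Hdense Hclosed Hsym [[vp [Hvp0 [Hvp Hvp_all]]] [vm [Hvm0 [Hvm Hvm_all]]]] Hinv Hno.
  assert (Hvp_span : forall w, defect_space Adot Ci w -> exists c : C, w = hscal c vp)
    by (intro w; apply Hvp_all).
  assert (Hvm_span : forall w, defect_space Adot (Copp Ci) w -> exists c : C, w = hscal c vm)
    by (intro w; apply Hvm_all).
  exact (cyclic_invariance_of_all_extensions Hlin Hdense Hclosed Hsym Hvp0 Hvm0 Hvp Hvm
           Hvp_span Hvm_span Hgrp Hrep Hinv Hno).
Qed.
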